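(* Let $\mathcal{F}=(\mu_n,\mathcal{S}_n,K_n,\pi_n)_{n\ge1}$ be a family of irreducible, reversible discrete-time finite Markov chains. Assume that $T_{n,2}(\mu_n,\epsilon_0)\to\infty$ for some $\epsilon_0>0$ or $\tau_n(c)\to\infty$ for some $c>0$, and that $\pi_n(|\mu_nK_n/\pi_n|^2)\to\infty$. Then the following are equivalent: (1) $\mathcal{F}$ has an $L^2$-cutoff; (2) for all $\epsilon,c>0$, $T_{n,2}(\mu_n,\epsilon)\lambda_{n,j_n(c)}\to\infty$; (3) there is $\epsilon>0$ with $T_{n,2}(\mu_n,\epsilon)\lambda_{n,j_n(c)}\to\infty$ for all $c>0$; (4) for all $c>0$, $\tau_n(c)\lambda_{n,j_n(c)}\to\infty$; (5) for all $\tilde c,c>0$, $\tau_n(\tilde c)\lambda_{n,j_n(c)}\to\infty$; (6) there is $\tilde c>0$ with $\tau_n(\tilde c)\lambda_{n,j_n(c)}\to\infty$ for all $c>0$. Moreover, if $\mathcal{F}$ has an $L^2$-cutoff, then $\tau_n(c)$ is an $L^2$-cutoff time for every $c>0$, and \[|T_{n,2}(\mu_n,\epsilon)-T_{n,2}(\mu_n,\delta)|=O\big(\max\{1,1/\lambda_{n,j_n(c)}\}\big)\ \ \forall\epsilon,\delta,c>0,\] \[|T_{n,2}(\mu_n,\epsilon)-\tau_n(c)|=O\big(\max\{1,\sqrt{\tau_n(c)/\lambda_{n,j_n(c)}}\}\big)\ \ \forall\epsilon,c>0.\]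
   Context: For the $n$th chain, $d_{n,2}(\mu_n,m)=\big(\sum_y|\mu_nK_n^m(y)/\pi_n(y)-1|^2\pi_n(y)\big)^{1/2}$ for integers $m\ge0$, $T_{n,2}(\mu_n,\epsilon)=\min\{m\in\mathbb{Z}_{\ge0}:d_{n,2}(\mu_n,m)\le\epsilon\}$, $\pi_n(|\mu_nK_n/\pi_n|^2)=\sum_y(\mu_nK_n(y))^2/\pi_n(y)$. Let $1=\beta_{n,0},\beta_{n,1},\dots,\beta_{n,|\mathcal{S}_n|-1}$ be the eigenvalues of $K_n$ with $|\beta_{n,1}|\ge|\beta_{n,2}|\ge\cdots$ and $L^2(\pi_n)$-orthonormal right eigenvectors $\phi_{n,0}=\mathbf 1,\phi_{n,1},\dots$; set $\lambda_{n,i}=-\log|\beta_{n,i}|$ (with $-\log0=\infty$, $1/\infty=0$); $\mu_n(\phi)=\sum_x\mu_n(x)\phi(x)$. For $c>0$: $j_n(c)=\min\{j\ge1:\sum_{i=1}^j|\mu_n(\phi_{n,i})|^2>c\}$ and $\tau_n(c)=\max_{j\ge j_n(c)}\frac{\log(1+\sum_{i=1}^j|\mu_n(\phi_{n,i})|^2)}{2\lambda_{n,j}}$. $L^2$-cutoff: there is $t_n>0$ with $d_{n,2}(\mu_n,\lceil(1+a)t_n\rceil)\to0$ and $d_{n,2}(\mu_n,\lfloor(1-a)t_n\rfloor)\to\infty$ for all $a\in(0,1)$; $t_n$ is a cutoff time. $a_n=O(b_n)$ means $\sup_na_n/b_n<\infty$. *)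

From Stdlib Require Import Reals ClassicalEpsilon.
Open Scope R_scope.

(** Finite sums: rsum k f = f 0 + ... + f (k-1). States of a chain with
    |S| = N are encoded as the naturals 0 .. N-1. *)
Fixpoint rsum (k : nat) (f : nat -> R) : R :=
  match k with O => 0 | S k' => rsum k' f + f k' end.

(** Extended nonnegative reals [0, +oo] (values of T_{n,2}, lambda_{n,i}, tau_n). *)
Inductive ER := Fin (r : R) | PInf.

Definition ER_max (a b : ER) : ER :=
  match a, b with Fin x, Fin y => Fin (Rmax x y) | _, _ => PInf end.

(** product on [0,+oo] with the convention 0 * oo = 0 *)
Definition ER_mul (a b : ER) : ER :=
  match a, b with
  | Fin x, Fin y => Fin (x * y)
  | Fin x, PInf => if Req_dec_T x 0 then Fin 0 else PInf
  | PInf, Fin y => if Req_dec_T y 0 then Fin 0 else PInf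
  | PInf, PInf => PInf
  end.

Definition ER_ge (a : ER) (M : R) : Prop :=
  match a with Fin x => M <= x | PInf => True end.

Definition ER_tends_infty (u : nat -> ER) : Prop :=
  forall M : R, exists N0 : nat, forall n : nat, (N0 <= n)%nat -> ER_ge (u n) M.

Definition ER_inv (a : ER) : R := match a with Fin x => / x | PInf => 0 end.

Fixpoint ER_bigmax (count : nat) (f : nat -> ER) : ER :=
  match count with O => Fin 0 | S k => ER_max (ER_bigmax k f) (f k) end.

Definition nat_floor (x : R) : nat := Z.to_nat (up x - 1).
Definition nat_ceil (x : R) : nat := Z.to_nat (1 - up (- x)).

Section Chain.
Variables (N : nat) (K : nat -> nat -> R) (pi mu : nat -> R).

Definition prob_dist (p : nat -> R) : Prop :=
  (forall x, (x < N)%nat -> 0 <= p x) /\ rsum N p = 1.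

Definition stochastic : Prop :=
  (forall x y, (x < N)%nat -> (y < N)%nat -> 0 <= K x y) /\
  (forall x, (x < N)%nat -> rsum N (fun y => K x y) = 1).

Fixpoint Kpow (m : nat) (x y : nat) : R :=
  match m with
  | O => if Nat.eqb x y then 1 else 0
  | S m' => rsum N (fun z => Kpow m' x z * K z y)
  end.

Definition irreducible : Prop :=
  forall x y, (x < N)%nat -> (y < N)%nat -> exists m, 0 < Kpow m x y.

Definition stationary : Prop :=
  forall y, (y < N)%nat -> rsum N (fun x => pi x * K x y) = pi y.

Definition reversible : Prop :=
  forall x y, (x < N)%nat -> (y < N)%nat -> pi x * K x y = pi y * K y x.

Definition irred_rev_chain : Prop :=
  (0 < N)%nat /\ stochastic /\ prob_dist pi /\ stationary /\
  irreducible /\ reversible /\ prob_dist mu.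

Definition spectral_decomp (beta : nat -> R) (phi : nat -> nat -> R) : Prop :=
  beta 0%nat = 1 /\
  (forall x, (x < N)%nat -> phi 0%nat x = 1) /\
  (forall i x, (i < N)%nat -> (x < N)%nat ->
      rsum N (fun y => K x y * phi i y) = beta i * phi i x) /\
  (forall i j, (i < N)%nat -> (j < N)%nat ->
      rsum N (fun x => phi i x * phi j x * pi x) = if Nat.eqb i j then 1 else 0) /\
  (forall i j, (1 <= i)%nat -> (i <= j)%nat -> (j < N)%nat ->
      Rabs (beta j) <= Rabs (beta i)).

Definition muKm (m y : nat) : R := rsum N (fun x => mu x * Kpow m x y).

Definition L2dist (m : nat) : R :=
  sqrt (rsum N (fun y => (muKm m y / pi y - 1) ^ 2 * pi y)).

Definition T2 (eps : R) : ER :=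
  match excluded_middle_informative (exists m, L2dist m <= eps) with
  | left _ => Fin (INR (epsilon (inhabits 0%nat)
                 (fun m => L2dist m <= eps /\ forall k, L2dist k <= eps -> (m <= k)%nat)))
  | right _ => PInf
  end.

Definition pi_norm2_muK : R := rsum N (fun y => (muKm 1 y) ^ 2 / pi y).

Variables (beta : nat -> R) (phi : nat -> nat -> R).

Definition mu_phi (i : nat) : R := rsum N (fun x => mu x * phi i x).

(** sum_{i=1}^j |mu(phi_i)|^2 *)
Definition Ssum (j : nat) : R := rsum j (fun i => (mu_phi (S i)) ^ 2).

Definition lam (i : nat) : ER :=
  if Req_dec_T (beta i) 0 then PInf else Fin (- ln (Rabs (beta i))).

(** j(c) = min {1 <= j <= N-1 : Ssum j > c}; (junk value 0 if no such j) *)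
Fixpoint jsearch (c : R) (fuel j : nat) : nat :=
  match fuel with
  | O => 0%nat
  | S f => if Rlt_dec c (Ssum j) then j else jsearch c f (S j)
  end.
Definition jn (c : R) : nat := jsearch c (N - 1) 1.

(** log(1 + Ssum j) / (2 lambda_j), with 1/oo = 0 and 1/0 = oo *)
Definition tau_term (j : nat) : ER :=
  match lam j with
  | PInf => Fin 0
  | Fin l => if Req_dec_T l 0 then PInf else Fin (ln (1 + Ssum j) / (2 * l))
  end.

Definition tau (c : R) : ER :=
  ER_bigmax (N - jn c) (fun k => tau_term (jn c + k)).

End Chain.

(** t is an L^2-cutoff time for the family with distances d n m = d_{n,2}(mu_n, m) *)
Definition L2_cutoff_time (d : nat -> nat -> R) (t : nat -> R) : Prop :=
  (forall n, 0 < t n) /\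
  forall a, 0 < a < 1 ->
    Un_cv (fun n => d n (nat_ceil ((1 + a) * t n))) 0 /\
    cv_infty (fun n => d n (nat_floor ((1 - a) * t n))).

Definition has_L2_cutoff (d : nat -> nat -> R) : Prop :=
  exists t, L2_cutoff_time d t.

From Stdlib Require Import Reals Lra Lia ZArith Classical ClassicalEpsilon Wf_nat.
From mathcomp Require all_boot all_algebra Rstruct.
Open Scope R_scope.

(* In the eigenbasis of K, d_2(mu, m)^2 = sum_(i >= 1) mu(phi_i)^2 beta_i^(2m).  Splitting the
   sum at j(c), the head is at most S_(j(c)-1) <= c, while the definition of tau(c) controls the
   tail from both sides: after time (1 + s) tau(c) + h it is at most exp(-2 lambda_(j(c)) h) / s,
   and before time tau(c) - h the distance is at least c/(1+c) exp(2 lambda_(j(c)) h).  So d_2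
   falls from large to small within a window of width O(1/lambda_(j(c))) around tau(c), and the
   family has a cutoff, at time tau(c), exactly when tau(c) lambda_(j(c)) -> oo; each of the
   conditions (2)-(6) is compared with this one. *)

Lemma rsum_ext k f g : (forall i, (i < k)%nat -> f i = g i) -> rsum k f = rsum k g.
Proof.
induction k as [|k IH]; simpl; intros H; [reflexivity|].
f_equal; [apply IH; intros; apply H|apply H]; lia.
Qed.

Lemma rsum_add k f g : rsum k (fun i => f i + g i) = rsum k f + rsum k g.
Proof. induction k; simpl; [lra|]. rewrite IHk. lra. Qed.

Lemma rsum_sub k f g : rsum k (fun i => f i - g i) = rsum k f - rsum k g.
Proof. induction k; simpl; [lra|]. rewrite IHk. lra. Qed.

Lemma rsum_scal_l k c f : rsum k (fun i => c * f i) = c * rsum k f.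
Proof. induction k; simpl; [lra|]. rewrite IHk. lra. Qed.

Lemma rsum_scal_r k c f : rsum k (fun i => f i * c) = rsum k f * c.
Proof. induction k; simpl; [lra|]. rewrite IHk. lra. Qed.

Lemma rsum_zero k : rsum k (fun _ => 0) = 0.
Proof. induction k; simpl; lra. Qed.

Lemma rsum_exchange a b (f : nat -> nat -> R) :
  rsum a (fun i => rsum b (fun j => f i j)) = rsum b (fun j => rsum a (fun i => f i j)).
Proof.
induction a; simpl; [now rewrite rsum_zero|].
rewrite IHa, <- rsum_add. reflexivity.
Qed.

Lemma rsum_delta_l k x g : (x < k)%nat ->
  rsum k (fun y => (if Nat.eqb x y then 1 else 0) * g y) = g x.
Proof.
induction k; intros H; simpl; [lia|].
destruct (Nat.eq_dec x k) as [->|Hne].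
- rewrite Nat.eqb_refl, (rsum_ext _ _ (fun _ => 0)), rsum_zero; [lra|].
  intros i Hi. destruct (Nat.eqb_spec k i); [lia|lra].
- rewrite IHk by lia. destruct (Nat.eqb_spec x k); [lia|lra].
Qed.

Lemma rsum_delta_r k x g : (x < k)%nat ->
  rsum k (fun y => g y * (if Nat.eqb y x then 1 else 0)) = g x.
Proof.
intros H. rewrite <- (rsum_delta_l k x g H). apply rsum_ext. intros i _.
rewrite Nat.eqb_sym. lra.
Qed.

Lemma rsum_first k f : (0 < k)%nat -> rsum k f = f 0%nat + rsum (k - 1) (fun i => f (S i)).
Proof.
intros Hk. destruct k as [|k]; [lia|]. replace (S k - 1)%nat with k by lia.
induction k; simpl in *; [lra|]. rewrite IHk by lia. lra.
Qed.

Lemma rsum_nonneg k f : (forall i, (i < k)%nat -> 0 <= f i) -> 0 <= rsum k f.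
Proof.
induction k; simpl; intros H; [lra|].
assert (0 <= f k) by (apply H; lia). assert (0 <= rsum k f) by (apply IHk; intros; apply H; lia). lra.
Qed.

Lemma rsum_le k f g : (forall i, (i < k)%nat -> f i <= g i) -> rsum k f <= rsum k g.
Proof.
induction k; simpl; intros H; [lra|].
assert (f k <= g k) by (apply H; lia). assert (rsum k f <= rsum k g) by (apply IHk; intros; apply H; lia). lra.
Qed.

Lemma rsum_sqr k f : (rsum k f)^2 = rsum k (fun i => rsum k (fun j => f i * f j)).
Proof.
replace ((rsum k f)^2) with (rsum k f * rsum k f) by ring.
rewrite <- rsum_scal_r. apply rsum_ext. intros i _. now rewrite <- rsum_scal_l.
Qed.

Lemma rsum_split a b f : (a <= b)%nat ->
  rsum b f = rsum a f + rsum (b - a) (fun i => f (a + i)%nat).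
Proof.
induction 1 as [|b Hab IH].
- rewrite Nat.sub_diag. simpl. lra.
- replace (S b - a)%nat with (S (b - a)) by lia. simpl. rewrite IH.
  replace (a + (b - a))%nat with b by lia. lra.
Qed.

Lemma rsum_telescope k (a : nat -> R) : rsum k (fun i => a i - a (S i)) = a 0%nat - a k.
Proof. induction k; simpl; [ring|]. rewrite IHk. ring. Qed.

Module Matrix.
Import all_boot all_algebra Rstruct GRing.Theory.
Local Open Scope ring_scope.

Lemma rsum_big (k : nat) (f : nat -> R) : rsum k f = \sum_(i < k) f i.
Proof.
elim: k => [|k IH] /=; first by rewrite big_ord0.
by rewrite big_ord_recr /= IH.
Qed.

Lemma eqb_ord {n} (i j : 'I_n) : Nat.eqb i j = (i == j).
Proof. by apply/PeanoNat.Nat.eqb_spec/eqP => [/val_inj|->]. Qed.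

(* With B = (A i x) and C = (A j x * w x), the hypothesis says B C = 1;
   a one-sided inverse of a square matrix is two-sided, and C B = 1 is the claim. *)
Lemma orthonormal_columns (n : nat) (A : nat -> nat -> R) (w : nat -> R) :
  (forall i j, lt i n -> lt j n ->
     rsum n (fun x => A i x * A j x * w x) = if Nat.eqb i j then 1 else 0) ->
  forall x y, lt x n -> lt y n ->
     rsum n (fun i => A i x * A i y * w x) = if Nat.eqb x y then 1 else 0.
Proof.
move=> orth x y /ltP ltx /ltP lty.
pose B : 'M[R]_n := \matrix_(i < n, z < n) A i z.
pose C : 'M[R]_n := \matrix_(z < n, j < n) (A j z * w z).
have BC : B *m C = 1%:M.
  apply/matrixP => i j; rewrite !mxE -eqb_ord.
  have -> : (Nat.eqb i j)%:R = (if Nat.eqb i j then 1 else 0) :> R by case: Nat.eqb.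
  rewrite -(orth i j (ltP (ltn_ord i)) (ltP (ltn_ord j))) rsum_big.
  by apply: eq_bigr => z _; rewrite !mxE mulrA.
move/matrixP: (mulmx1C BC) => /(_ (Ordinal ltx) (Ordinal lty)).
rewrite !mxE -(eqb_ord (Ordinal ltx) (Ordinal lty)) /= rsum_big.
have -> : (Nat.eqb x y)%:R = (if Nat.eqb x y then 1 else 0) :> R by case: Nat.eqb.
move=> <-.
by apply: eq_bigr => i _; rewrite !mxE mulrAC.
Qed.
End Matrix.

Lemma nat_ceil_spec x : 0 <= x -> x <= INR (nat_ceil x) < x + 1.
Proof.
intros Hx. unfold nat_ceil. destruct (archimed (-x)) as [H1 H2].
assert (Hz : (0 <= 1 - up (- x))%Z).
{ assert (IZR (up (-x)) <= 1) by lra. apply le_IZR in H. lia. }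
rewrite INR_IZR_INZ, Z2Nat.id, minus_IZR by exact Hz. simpl. lra.
Qed.

Lemma nat_floor_spec x : 0 <= x -> x - 1 < INR (nat_floor x) <= x.
Proof.
intros Hx. unfold nat_floor. destruct (archimed x) as [H1 H2].
assert (Hz : (0 <= up x - 1)%Z).
{ assert (0 < IZR (up x)) by lra. apply lt_IZR in H. lia. }
rewrite INR_IZR_INZ, Z2Nat.id, minus_IZR by exact Hz. simpl. lra.
Qed.

Lemma exp_le_exp x y : x <= y -> exp x <= exp y.
Proof. intros H. destruct (Req_dec x y) as [->|]; [lra|]. apply Rlt_le, exp_increasing; lra. Qed.

Lemma ln_le x y : 0 < x -> x <= y -> ln x <= ln y.
Proof. intros H H'. destruct (Req_dec x y) as [->|]; [lra|]. apply Rlt_le, ln_increasing; lra. Qed.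

Lemma exp_neg_le_inv x : 0 <= x -> exp (- x) <= 1 / (1 + x).
Proof.
intros H. rewrite exp_Ropp. pose proof (exp_ineq1_le x). pose proof (exp_pos x).
apply Rmult_le_reg_l with (exp x * (1 + x)); [nra|]. field_simplify; lra.
Qed.

Lemma exp_increment_bound p q s : 0 < s -> p <= q ->
  (exp q - exp p) * exp (- ((1 + s) * q)) <= (exp (- (s * p)) - exp (- (s * q))) / s.
Proof.
intros Hs Hpq.
assert (A : exp p >= exp q * (1 + (p - q))).
{ replace (exp p) with (exp q * exp (p - q)) by (rewrite <- exp_plus; f_equal; ring).
  pose proof (exp_ineq1_le (p - q)). pose proof (exp_pos q). nra. }
assert (B : exp (- (s * p)) >= exp (- (s * q)) * (1 + s * (q - p))).
{ replace (exp (- (s * p))) with (exp (- (s * q)) * exp (s * (q - p)))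
    by (rewrite <- exp_plus; f_equal; ring).
  pose proof (exp_ineq1_le (s * (q - p))). pose proof (exp_pos (- (s * q))). nra. }
assert (C : exp q * exp (- ((1 + s) * q)) = exp (- (s * q))) by (rewrite <- exp_plus; f_equal; ring).
pose proof (exp_pos (- ((1 + s) * q))). pose proof (exp_pos (- (s * q))).
apply Rle_trans with ((q - p) * exp (- (s * q))).
- rewrite <- C. nra.
- apply Rmult_le_reg_l with s; [exact Hs|]. field_simplify; nra.
Qed.

Lemma exp_scaled_tail_lt a eta x : 0 < a -> 0 < eta -> 64 / (a ^ 2 * eta) + 1 <= x ->
  exp (- (x * a / 4)) / (a / 8) < eta / 2.
Proof.
intros Ha He Hx. assert (Ha2 : 0 < a ^ 2 * eta) by (apply Rmult_lt_0_compat; [apply pow_lt|]; lra).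
assert (H64 : 64 < x * (a ^ 2 * eta)).
{ apply Rmult_le_compat_r with (r := a ^ 2 * eta) in Hx; [|lra].
  replace ((64 / (a ^ 2 * eta) + 1) * (a ^ 2 * eta)) with (64 + a ^ 2 * eta) in Hx by (field; lra). lra. }
assert (Hxa : 0 < x * a) by (assert (0 < x) by nra; nra).
set (E := exp (- (x * a / 4))). pose proof (exp_neg_le_inv (x * a / 4) ltac:(lra)) as Hinv. fold E in Hinv.
assert (HE : E * (x * a) < 4).
{ pose proof (exp_pos (- (x * a / 4))) as HEpos. fold E in HEpos.
  apply Rmult_le_compat_r with (r := 1 + x * a / 4) in Hinv; [|lra].
  replace (1 / (1 + x * a / 4) * (1 + x * a / 4)) with 1 in Hinv by (field; lra). nra. }
assert (Hgoal : 16 * E < a * eta).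
{ apply Rmult_lt_reg_r with (x * a); [exact Hxa|]. simpl in H64. nra. }
replace (E / (a / 8)) with (8 * E / a) by (field; lra).
apply Rmult_lt_reg_r with a; [exact Ha|].
replace (8 * E / a * a) with (8 * E) by (field; lra). lra.
Qed.

Lemma exp_middle_le c e l y x : 0 < c -> 0 < e -> 0 <= l -> 0 <= y <= x ->
  3 * c / (2 * e) + 1 <= y * l -> c * exp (-2 * l * x) <= e / 3.
Proof.
intros Hc He Hl Hyx HK. set (K2 := 3 * c / (2 * e) + 1).
assert (HK2 : 1 < K2) by (assert (0 < 3 * c / (2 * e)) by (apply Rdiv_lt_0_compat; lra); unfold K2; lra).
assert (Hexp : exp (-2 * l * x) <= 1 / (2 * K2)).
{ apply Rle_trans with (exp (- (2 * l * y))); [apply exp_le_exp; nra|].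
  apply Rle_trans with (1 / (1 + 2 * l * y)); [apply exp_neg_le_inv; nra|].
  unfold Rdiv. rewrite !Rmult_1_l. apply Rinv_le_contravar; [lra|fold K2 in HK; nra]. }
assert (c * (1 / (2 * K2)) = e / 3 * (3 * c / (3 * c + 2 * e))) by (unfold K2; field; lra).
assert (3 * c / (3 * c + 2 * e) <= 1)
  by (apply Rmult_le_reg_r with (3 * c + 2 * e); [lra|]; field_simplify; lra).
assert (c * exp (-2 * l * x) <= c * (1 / (2 * K2))) by (apply Rmult_le_compat_l; lra).
nra.
Qed.

Lemma exp_sqrt_tail_le y e : 0 < e -> 24 / e <= y -> 2 * y * exp (- y) <= e / 3.
Proof.
intros He Hy. assert (Hy0 : 0 < y) by (assert (0 < 24 / e) by (apply Rdiv_lt_0_compat; lra); lra).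
assert (Ey : (1 + y / 2) * (1 + y / 2) <= exp y).
{ replace y with (y / 2 + y / 2) at 3 by field. rewrite exp_plus.
  pose proof (exp_ineq1_le (y / 2)). apply Rmult_le_compat; lra. }
assert (H8 : 2 * y * exp (- y) <= 8 / y).
{ rewrite exp_Ropp. pose proof (exp_pos y).
  apply Rmult_le_reg_r with (exp y * y); [nra|]. field_simplify; nra. }
assert (8 / y <= e / 3).
{ apply Rmult_le_reg_r with y; [exact Hy0|]. replace (8 / y * y) with 8 by (field; lra).
  apply Rmult_le_compat_r with (r := e / 3) in Hy; [|lra].
  replace (24 / e * (e / 3)) with 8 in Hy by (field; lra). lra. }
lra.
Qed.

Lemma exp_ceil_ln_le l a : 0 < l -> 0 < a ->
  exp (-2 * l * INR (nat_ceil (Rmax 0 (ln a) / (2 * l)))) <= / a.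
Proof.
intros Hl Ha. set (L := Rmax 0 (ln a)).
assert (HL : 0 <= L /\ ln a <= L) by (split; [apply Rmax_l|apply Rmax_r]).
pose proof (nat_ceil_spec (L / (2 * l)) ltac:(apply Rmult_le_pos; [lra|apply Rlt_le, Rinv_0_lt_compat; lra])) as Hk.
assert (Hkl : 2 * l * (L / (2 * l)) <= 2 * l * INR (nat_ceil (L / (2 * l)))) by (apply Rmult_le_compat_l; lra).
replace (2 * l * (L / (2 * l))) with L in Hkl by (field; lra).
rewrite <- (exp_ln a), <- exp_Ropp by exact Ha. apply exp_le_exp. lra.
Qed.

Lemma gap_lower r t0 t' m : 0 < r -> 0 < t0 -> (1 + r) * t0 < t' -> m <= (1 + r / 2) * t0 ->
  t' * r / (2 * (1 + r)) <= t' - m.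
Proof.
intros Hr Ht0 Ht' Hm.
assert ((1 + r / 2) * t0 <= (1 + r / 2) / (1 + r) * t')
  by (apply Rmult_le_reg_l with (1 + r); [lra|]; field_simplify; nra).
assert ((1 + r / 2) / (1 + r) * t' = t' - t' * r / (2 * (1 + r))) by (field; lra). lra.
Qed.

Lemma sqrt_ratio_mul t l : 0 < t -> 0 < l ->
  sqrt (t * / l) * sqrt (l * t) = t /\ l * sqrt (t * / l) = sqrt (l * t).
Proof.
intros Ht Hl. assert (Hinv : 0 < / l) by (apply Rinv_0_lt_compat; exact Hl).
rewrite <- sqrt_mult by nra. split.
- replace (t * / l * (l * t)) with (t * t) by (field; lra). apply sqrt_square. lra.
- rewrite <- (sqrt_square l) at 1 by lra. rewrite <- sqrt_mult by nra. f_equal. field. lra.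
Qed.

Lemma sqrt_le_iff x e : 0 <= x -> 0 < e -> (sqrt x <= e <-> x <= e ^ 2).
Proof.
intros Hx He. split; intros H.
- pose proof (sqrt_pos x). replace x with (sqrt x ^ 2) by (simpl; rewrite Rmult_1_r; apply sqrt_sqrt; auto). nra.
- rewrite <- (sqrt_pow2 e) by lra. now apply sqrt_le_1_alt.
Qed.

Definition ER_le (a b : ER) : Prop :=
  match a, b with
  | Fin x, Fin y => x <= y
  | _, PInf => True
  | PInf, Fin _ => False
  end.

Lemma ER_bigmax_ge cnt f k : (k < cnt)%nat -> ER_le (f k) (ER_bigmax cnt f).
Proof.
induction cnt; intros H; [lia|]. simpl.
destruct (Nat.eq_dec k cnt) as [->|Hne].
- destruct (ER_bigmax cnt f), (f cnt); simpl; auto. apply Rmax_r.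
- specialize (IHcnt ltac:(lia)).
  destruct (ER_bigmax cnt f), (f k), (f cnt); simpl in *; auto.
  all: eapply Rle_trans; [apply IHcnt | apply Rmax_l].
Qed.

Lemma ER_bigmax_ge0 cnt f : ER_le (Fin 0) (ER_bigmax cnt f).
Proof.
induction cnt; simpl; [lra|]. destruct (ER_bigmax cnt f), (f cnt); simpl in *; auto.
eapply Rle_trans; [apply IHcnt | apply Rmax_l].
Qed.

Lemma ER_bigmax_le cnt f X : ER_le (Fin 0) X -> (forall k, (k < cnt)%nat -> ER_le (f k) X) ->
  ER_le (ER_bigmax cnt f) X.
Proof.
induction cnt; intros H0 H; simpl; auto.
specialize (IHcnt H0 ltac:(intros; apply H; lia)). specialize (H cnt ltac:(lia)).
destruct (ER_bigmax cnt f), (f cnt), X; simpl in *; auto. now apply Rmax_lub.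
Qed.

Lemma ER_bigmax_attained_fin cnt f t : ER_bigmax cnt f = Fin t -> 0 < t ->
  exists k, (k < cnt)%nat /\ f k = Fin t.
Proof.
induction cnt; simpl; intros H Ht; [inversion H; lra|].
destruct (ER_bigmax cnt f) eqn:E1, (f cnt) eqn:E2; simpl in *; try discriminate.
assert (Hmax : Rmax r r0 = t) by congruence. unfold Rmax in Hmax. destruct (Rle_dec r r0).
- exists cnt. split; [lia|congruence].
- destruct (IHcnt ltac:(congruence) Ht) as [k [Hk Hf]]. exists k. split; [lia|exact Hf].
Qed.

Lemma ER_bigmax_attained_inf cnt f : ER_bigmax cnt f = PInf -> exists k, (k < cnt)%nat /\ f k = PInf.
Proof.
induction cnt; simpl; intros H; [discriminate|].
destruct (ER_bigmax cnt f) eqn:E1, (f cnt) eqn:E2; simpl in *; try discriminate.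
- exists cnt; auto.
- destruct IHcnt as [k [Hk Hf]]; auto. exists k; split; auto.
- exists cnt; auto.
Qed.

Lemma ER_mul_0_r a : ER_mul a (Fin 0) = Fin 0.
Proof. destruct a; simpl; [f_equal; ring|]. destruct (Req_dec_T 0 0); [auto|contradiction]. Qed.

Lemma ER_mul_PInf_l y : y <> 0 -> ER_mul PInf (Fin y) = PInf.
Proof. intros H. simpl. destruct (Req_dec_T y 0); [contradiction|auto]. Qed.

(* Junk value 1 outside the positive finite values, so that it can serve as a cutoff time. *)
Definition ER_pos_or_one (x : ER) : R :=
  match x with Fin y => if Rlt_dec 0 y then y else 1 | PInf => 1 end.

Lemma ER_pos_or_one_pos x : 0 < ER_pos_or_one x.
Proof. destruct x as [y|]; simpl; [destruct (Rlt_dec 0 y)|]; lra. Qed.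

Lemma ER_pos_or_one_Fin y : 0 < y -> ER_pos_or_one (Fin y) = y.
Proof. intros H. simpl. destruct (Rlt_dec 0 y); [reflexivity|lra]. Qed.

Definition eventually (P : nat -> Prop) : Prop := exists N0, forall n, (N0 <= n)%nat -> P n.

Lemma eventually_and P Q : eventually P -> eventually Q -> eventually (fun n => P n /\ Q n).
Proof. intros [a Ha] [b Hb]. exists (max a b). intros n Hn. split; [apply Ha|apply Hb]; lia. Qed.

Lemma eventually_mono (P Q : nat -> Prop) : eventually P -> (forall n, P n -> Q n) -> eventually Q.
Proof. intros [a Ha] H. exists a. intros; auto. Qed.

Lemma T2_fin N K pi mu eps : (exists m, L2dist N K pi mu m <= eps) ->
  exists k, T2 N K pi mu eps = Fin (INR k) /\ L2dist N K pi mu k <= eps /\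
    forall m, L2dist N K pi mu m <= eps -> (k <= m)%nat.
Proof.
intros H. unfold T2. destruct (excluded_middle_informative _) as [_|]; [|contradiction].
set (P := fun m => L2dist N K pi mu m <= eps /\ forall k, L2dist N K pi mu k <= eps -> (m <= k)%nat).
assert (HP : exists m, P m).
{ destruct (dec_inh_nat_subset_has_unique_least_element (fun m => L2dist N K pi mu m <= eps))
    as (m & ((Hm1 & Hm2) & _)); [intros n; apply classic|exact H|].
  exists m. split; auto. }
exists (epsilon (inhabits 0%nat) P). split; [reflexivity|]. exact (epsilon_spec _ P HP).
Qed.

Lemma T2_inf N K pi mu eps : (forall m, eps < L2dist N K pi mu m) -> T2 N K pi mu eps = PInf.
Proof.
intros H. unfold T2. destruct (excluded_middle_informative _) as [[m Hm]|]; [|reflexivity].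
specialize (H m). lra.
Qed.

(** * Spectral expansion of the L2 distance *)

Definition spec_term (N : nat) (mu beta : nat -> R) (phi : nat -> nat -> R) (m j : nat) : R :=
  (mu_phi N mu phi j) ^ 2 * beta j ^ (2 * m).

Definition spec_dist2 (N : nat) (mu beta : nat -> R) (phi : nat -> nat -> R) (m : nat) : R :=
  rsum (N - 1) (fun i => spec_term N mu beta phi m (S i)).

Section SpectralExpansion.
Context {N : nat} {K : nat -> nat -> R} {pi mu beta : nat -> R} {phi : nat -> nat -> R}.
Hypothesis chain : irred_rev_chain N K pi mu.
Hypothesis spec : spectral_decomp N K pi beta phi.

Lemma phi_complete x y : (x < N)%nat -> (y < N)%nat ->
  rsum N (fun i => phi i x * phi i y * pi x) = if Nat.eqb x y then 1 else 0.
Proof.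
destruct spec as (_ & _ & _ & Horth & _).
apply Matrix.orthonormal_columns. intros; now apply Horth.
Qed.

Lemma pi_pos x : (x < N)%nat -> 0 < pi x.
Proof.
intros Hx. destruct chain as (_ & _ & (Hpi & _) & _).
pose proof (phi_complete x x Hx Hx) as E. rewrite Nat.eqb_refl, rsum_scal_r in E.
specialize (Hpi x Hx). destruct (Req_dec (pi x) 0) as [e|e]; [rewrite e in E|]; lra.
Qed.

Lemma Kpow_eigen m i x : (i < N)%nat -> (x < N)%nat ->
  rsum N (fun y => Kpow N K m x y * phi i y) = beta i ^ m * phi i x.
Proof.
destruct spec as (_ & _ & Heig & _). revert x.
induction m as [|m IH]; intros x Hi Hx; simpl.
- rewrite rsum_delta_l by exact Hx. lra.
- transitivity (rsum N (fun z => Kpow N K m x z * rsum N (fun y => K z y * phi i y))).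
  + rewrite (rsum_ext N _ (fun y => rsum N (fun z => Kpow N K m x z * K z y * phi i y)))
      by (intros; now rewrite <- rsum_scal_r).
    rewrite rsum_exchange. apply rsum_ext. intros z Hz. rewrite <- rsum_scal_l.
    apply rsum_ext. intros; ring.
  + rewrite (rsum_ext N _ (fun z => beta i * (Kpow N K m x z * phi i z)))
      by (intros z Hz; rewrite Heig by auto; ring).
    rewrite rsum_scal_l, IH by auto. ring.
Qed.

Lemma Kpow_spectral m x y : (x < N)%nat -> (y < N)%nat ->
  Kpow N K m x y = pi y * rsum N (fun i => beta i ^ m * phi i x * phi i y).
Proof.
intros Hx Hy.
rewrite <- (rsum_delta_r N y (Kpow N K m x)) by exact Hy.
rewrite (rsum_ext N _ (fun z => rsum N (fun i => pi y * phi i y * (Kpow N K m x z * phi i z)))).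
2:{ intros z Hz. rewrite Nat.eqb_sym, <- phi_complete, <- rsum_scal_l by auto.
    apply rsum_ext; intros; ring. }
rewrite rsum_exchange, <- rsum_scal_l. apply rsum_ext. intros i Hi.
rewrite rsum_scal_l, Kpow_eigen by auto. ring.
Qed.

Lemma muKm_spectral m y : (y < N)%nat ->
  muKm N K mu m y = pi y * rsum N (fun i => beta i ^ m * mu_phi N mu phi i * phi i y).
Proof.
intros Hy. unfold muKm, mu_phi.
rewrite (rsum_ext N _ (fun x => rsum N (fun i => pi y * (mu x * (beta i ^ m * phi i x * phi i y))))).
2:{ intros x Hx. rewrite Kpow_spectral, !rsum_scal_l by auto.
    rewrite <- !rsum_scal_l. apply rsum_ext; intros; ring. }
rewrite rsum_exchange, <- rsum_scal_l. apply rsum_ext. intros i Hi.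
rewrite rsum_scal_l. f_equal.
rewrite (rsum_ext N _ (fun x => (beta i ^ m * phi i y) * (mu x * phi i x))) by (intros; ring).
rewrite rsum_scal_l. ring.
Qed.

Lemma parseval (c : nat -> R) :
  rsum N (fun y => (rsum N (fun i => c i * phi i y))^2 * pi y) = rsum N (fun i => (c i)^2).
Proof.
destruct spec as (_ & _ & _ & Horth & _).
rewrite (rsum_ext N _ (fun y => rsum N (fun i => rsum N (fun j => c i * c j * (phi i y * phi j y * pi y))))).
2:{ intros y Hy. rewrite rsum_sqr, <- rsum_scal_r. apply rsum_ext. intros i Hi.
    rewrite <- rsum_scal_r. apply rsum_ext. intros; ring. }
rewrite rsum_exchange. apply rsum_ext. intros i Hi. rewrite rsum_exchange.
rewrite (rsum_ext N _ (fun j => (c i * c j) * (if Nat.eqb j i then 1 else 0))).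
2:{ intros j Hj. rewrite rsum_scal_l, Horth, Nat.eqb_sym by auto. reflexivity. }
rewrite (rsum_delta_r N i (fun j => c i * c j)) by exact Hi. ring.
Qed.

Lemma mu_phi_0 : mu_phi N mu phi 0 = 1.
Proof.
destruct spec as (_ & Hphi0 & _). destruct chain as (_ & _ & _ & _ & _ & _ & (_ & Hmu)).
unfold mu_phi. rewrite <- Hmu. apply rsum_ext. intros x Hx. rewrite Hphi0 by exact Hx. ring.
Qed.

Lemma L2dist_spectral m : L2dist N K pi mu m = sqrt (spec_dist2 N mu beta phi m).
Proof.
unfold L2dist. f_equal.
destruct spec as (Hb0 & Hphi0 & _). destruct chain as (HN & _).
pose (c := fun i => beta i ^ m * mu_phi N mu phi i - (if Nat.eqb 0 i then 1 else 0)).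
rewrite (rsum_ext N _ (fun y => (rsum N (fun i => c i * phi i y))^2 * pi y)).
2:{ intros y Hy. f_equal. f_equal. unfold c.
    rewrite (rsum_ext N _ (fun i => beta i ^ m * mu_phi N mu phi i * phi i y -
        (if Nat.eqb 0 i then 1 else 0) * phi i y)) by (intros; ring).
    rewrite rsum_sub, rsum_delta_l, Hphi0, muKm_spectral by auto.
    pose proof (pi_pos y Hy). field. lra. }
rewrite parseval, (rsum_first N) by exact HN.
unfold c at 1. rewrite Hb0, mu_phi_0. simpl Nat.eqb.
rewrite pow1. replace ((1 * 1 - 1) ^ 2) with 0 by ring. rewrite Rplus_0_l.
apply rsum_ext. intros i Hi. unfold c, spec_term. simpl Nat.eqb.
rewrite Nat.mul_comm, pow_mult. ring.
Qed.

Lemma pi_norm2_muK_spectral : pi_norm2_muK N K pi mu = 1 + spec_dist2 N mu beta phi 1.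
Proof.
unfold pi_norm2_muK. destruct spec as (Hb0 & _). destruct chain as (HN & _).
pose (c := fun i => beta i ^ 1 * mu_phi N mu phi i).
rewrite (rsum_ext N _ (fun y => (rsum N (fun i => c i * phi i y))^2 * pi y)).
2:{ intros y Hy. rewrite muKm_spectral by exact Hy. unfold c.
    pose proof (pi_pos y Hy). field. lra. }
rewrite parseval, (rsum_first N) by exact HN.
unfold c at 1. rewrite Hb0, mu_phi_0. f_equal; [ring|].
apply rsum_ext. intros i Hi. unfold c, spec_term. change (2 * 1)%nat with 2%nat. ring.
Qed.

(* Jensen for the Markov operator, (K f)^2 <= K (f^2), integrated against the
   stationary pi, gives beta_i^2 = pi((K phi_i)^2) <= pi(phi_i^2) = 1. *)
Lemma abs_beta_le1 i : (i < N)%nat -> Rabs (beta i) <= 1.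
Proof.
intros Hi.
destruct spec as (_ & _ & Heig & Horth & _).
destruct chain as (_ & (HK0 & HK1) & (Hpi & _) & Hstat & _).
assert (Jensen : forall x, (x < N)%nat ->
  (rsum N (fun y => K x y * phi i y))^2 <= rsum N (fun y => K x y * (phi i y)^2)).
{ intros x Hx. set (a := rsum N (fun y => K x y * phi i y)).
  assert (Hvar : 0 <= rsum N (fun y => K x y * (phi i y - a)^2)).
  { apply rsum_nonneg. intros y Hy. apply Rmult_le_pos; [now apply HK0|apply pow2_ge_0]. }
  rewrite (rsum_ext N _ (fun y => K x y * (phi i y)^2 - 2 * a * (K x y * phi i y) + a^2 * K x y))
    in Hvar by (intros; ring).
  rewrite rsum_add, rsum_sub, !rsum_scal_l, HK1 in Hvar by exact Hx.
  fold a in Hvar. lra. }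
assert (E1 : rsum N (fun x => pi x * (rsum N (fun y => K x y * phi i y))^2) = (beta i)^2).
{ rewrite (rsum_ext N _ (fun x => (beta i)^2 * (phi i x * phi i x * pi x)))
    by (intros x Hx; rewrite Heig by auto; ring).
  rewrite rsum_scal_l, Horth, Nat.eqb_refl by auto. ring. }
assert (E2 : rsum N (fun x => pi x * rsum N (fun y => K x y * (phi i y)^2)) = 1).
{ rewrite (rsum_ext N _ (fun x => rsum N (fun y => (phi i y)^2 * (pi x * K x y))))
    by (intros; rewrite <- rsum_scal_l; apply rsum_ext; intros; ring).
  rewrite rsum_exchange.
  rewrite (rsum_ext N _ (fun y => phi i y * phi i y * pi y))
    by (intros y Hy; rewrite rsum_scal_l, Hstat by exact Hy; ring).
  rewrite Horth, Nat.eqb_refl by auto. reflexivity. }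
assert (Hsq : (beta i)^2 <= 1).
{ rewrite <- E1, <- E2. apply rsum_le. intros x Hx.
  apply Rmult_le_compat_l; [now apply Hpi|now apply Jensen]. }
rewrite <- (Rabs_right 1) by lra. apply Rsqr_le_abs_0. unfold Rsqr. nra.
Qed.

End SpectralExpansion.

(** * The L2 distance around tau(c) *)

Definition eigen_bounds (N : nat) (beta : nat -> R) : Prop :=
  (forall j, (1 <= j < N)%nat -> Rabs (beta j) <= 1) /\
  (forall i j, (1 <= i)%nat -> (i <= j)%nat -> (j < N)%nat -> Rabs (beta j) <= Rabs (beta i)).

Lemma eigen_bounds_of_chain {N K pi mu beta phi} :
  irred_rev_chain N K pi mu -> spectral_decomp N K pi beta phi -> eigen_bounds N beta.
Proof.
intros chain spec. split.
- intros j Hj. apply (abs_beta_le1 chain spec). lia.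
- destruct spec as (_ & _ & _ & _ & Hmon). exact Hmon.
Qed.

Definition rate (beta : nat -> R) (j : nat) : R := - ln (Rabs (beta j)).

Lemma lam_PInf beta j : beta j = 0 -> lam beta j = PInf.
Proof. intros H. unfold lam. destruct (Req_dec_T (beta j) 0); [auto|contradiction]. Qed.

Lemma lam_Fin beta j : beta j <> 0 -> lam beta j = Fin (rate beta j).
Proof. intros H. unfold lam. destruct (Req_dec_T (beta j) 0); [contradiction|auto]. Qed.

Lemma lam_FinP beta j l : lam beta j = Fin l -> beta j <> 0 /\ l = rate beta j.
Proof. unfold lam. destruct (Req_dec_T (beta j) 0); [discriminate|]. intros H. now injection H as <-. Qed.

Lemma rate_eq0 beta j : beta j <> 0 -> rate beta j = 0 -> Rabs (beta j) = 1.
Proof.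
unfold rate. intros Hb H. assert (Hln : ln (Rabs (beta j)) = ln 1) by (rewrite ln_1; lra).
apply ln_inv; [now apply Rabs_pos_lt|lra|exact Hln].
Qed.

Lemma rate_abs1 beta j : Rabs (beta j) = 1 -> rate beta j = 0.
Proof. unfold rate. intros ->. rewrite ln_1. ring. Qed.

Lemma pow_even_abs x m : x ^ (2 * m) = (Rabs x) ^ (2 * m).
Proof. rewrite !pow_mult. f_equal. rewrite <- !Rsqr_pow2. apply Rsqr_abs. Qed.

Lemma pow_even_nonneg x m : 0 <= x ^ (2 * m).
Proof. rewrite pow_mult. apply pow_le, pow2_ge_0. Qed.

Lemma pow_even_le x y m : Rabs x <= Rabs y -> x ^ (2 * m) <= y ^ (2 * m).
Proof. intros H. rewrite (pow_even_abs x), (pow_even_abs y). apply pow_incr. split; [apply Rabs_pos|exact H]. Qed.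

Lemma pow_even_rate beta j m : beta j <> 0 -> beta j ^ (2 * m) = exp (-2 * rate beta j * INR m).
Proof.
intros H. rewrite pow_even_abs, <- Rpower_pow by (now apply Rabs_pos_lt).
unfold Rpower, rate. f_equal. rewrite mult_INR. simpl. ring.
Qed.

Section SpectralProfile.
Context {N : nat} {mu beta : nat -> R} {phi : nat -> nat -> R}.
Hypothesis bounds : eigen_bounds N beta.

Local Notation Ss := (Ssum N mu phi).
Local Notation D := (spec_dist2 N mu beta phi).
Local Notation term := (spec_term N mu beta phi).
Local Notation lb := (rate beta).
Local Notation J := (jn N mu phi).
Local Notation tauc := (tau N mu beta phi).
Local Notation tterm := (tau_term N mu beta phi).

Lemma eigen_bounds_le1 j : (1 <= j < N)%nat -> Rabs (beta j) <= 1.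
Proof. apply bounds. Qed.

Lemma eigen_bounds_antitone i j : (1 <= i)%nat -> (i <= j)%nat -> (j < N)%nat -> Rabs (beta j) <= Rabs (beta i).
Proof. apply bounds. Qed.

Lemma beta_pow_even_le1 j m : (1 <= j < N)%nat -> beta j ^ (2 * m) <= 1.
Proof. intros H. rewrite <- (pow1 (2 * m)). apply pow_even_le. rewrite Rabs_R1. now apply eigen_bounds_le1. Qed.

Lemma rate_nonneg j : (1 <= j < N)%nat -> beta j <> 0 -> 0 <= lb j.
Proof.
intros H Hn. unfold rate. pose proof (eigen_bounds_le1 j H). pose proof (Rabs_pos_lt _ Hn).
pose proof (ln_le (Rabs (beta j)) 1 ltac:(lra) ltac:(lra)). rewrite ln_1 in *. lra.
Qed.

Lemma rate_mono i j : (1 <= i)%nat -> (i <= j)%nat -> (j < N)%nat -> beta j <> 0 -> lb i <= lb j.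
Proof.
intros H1 H2 H3 Hn. unfold rate. pose proof (eigen_bounds_antitone i j H1 H2 H3).
pose proof (Rabs_pos_lt _ Hn). pose proof (ln_le (Rabs (beta j)) (Rabs (beta i))). lra.
Qed.

Lemma beta_eq0_tail i j : (1 <= i)%nat -> (i <= j)%nat -> (j < N)%nat -> beta i = 0 -> beta j = 0.
Proof.
intros H1 H2 H3 Hi. pose proof (eigen_bounds_antitone i j H1 H2 H3) as Hle.
rewrite Hi, Rabs_R0 in Hle. pose proof (Rabs_pos (beta j)).
destruct (Req_dec (beta j) 0) as [|Hn]; [auto|]. pose proof (Rabs_pos_lt _ Hn). lra.
Qed.

Lemma Ssum_succ j : Ss (S j) = Ss j + (mu_phi N mu phi (S j))^2.
Proof. reflexivity. Qed.

Lemma Ssum_mono i j : (i <= j)%nat -> Ss i <= Ss j.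
Proof. induction 1; [lra|]. rewrite Ssum_succ. pose proof (pow2_ge_0 (mu_phi N mu phi (S m))). lra. Qed.

Lemma Ssum_nonneg j : 0 <= Ss j.
Proof. apply (Ssum_mono 0 j). lia. Qed.

Lemma Ssum_add a k : Ss (a + k) = Ss a + rsum k (fun i => (mu_phi N mu phi (S a + i))^2).
Proof.
induction k; simpl; [rewrite Nat.add_0_r; ring|].
rewrite Nat.add_succ_r, Ssum_succ, IHk. simpl. ring.
Qed.

Lemma spec_term_nonneg m j : 0 <= term m j.
Proof. apply Rmult_le_pos; [apply pow2_ge_0|apply pow_even_nonneg]. Qed.

Lemma rsum_spec_term_nonneg m k p : 0 <= rsum k (fun i => term m (p + i)%nat).
Proof. apply rsum_nonneg. intros; apply spec_term_nonneg. Qed.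

Lemma spec_dist2_nonneg m : 0 <= D m.
Proof. exact (rsum_spec_term_nonneg m (N - 1) 1). Qed.

Lemma jsearch_spec c fuel j : (1 <= j)%nat -> Ss (j - 1) <= c -> c < Ss (j + fuel - 1) ->
  let r := jsearch N mu phi c fuel j in (j <= r <= j + fuel - 1)%nat /\ c < Ss r /\ Ss (r - 1) <= c.
Proof.
revert j. induction fuel as [|fuel IH]; intros j Hj H1 H2; simpl.
- replace (j + 0 - 1)%nat with (j - 1)%nat in H2 by lia. lra.
- destruct (Rlt_dec c (Ssum N mu phi j)) as [h|h]; [repeat split; auto; lia|].
  destruct (IH (S j)) as (A & B & C); [lia|replace (S j - 1)%nat with j by lia; lra|
    replace (S j + fuel - 1)%nat with (j + S fuel - 1)%nat by lia; exact H2|].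
  repeat split; auto; lia.
Qed.

Lemma jn_spec c : 0 <= c -> c < Ss (N - 1) ->
  (1 <= J c <= N - 1)%nat /\ c < Ss (J c) /\ Ss (J c - 1) <= c.
Proof.
intros H0 H. unfold jn. destruct (jsearch_spec c (N - 1) 1) as (A & B & C).
- lia.
- simpl. unfold Ssum. simpl. lra.
- replace (1 + (N - 1) - 1)%nat with (N - 1)%nat by lia. exact H.
- repeat split; auto; lia.
Qed.

Lemma jn_mono c c' : 0 <= c -> c <= c' -> c' < Ss (N - 1) -> (J c <= J c')%nat.
Proof.
intros H0 H1 H2. destruct (jn_spec c) as (A & B & C); [lra|lra|].
destruct (jn_spec c') as (A' & B' & C'); [lra|lra|].
destruct (Nat.le_gt_cases (J c) (J c')) as [|Hlt]; [auto|].
pose proof (Ssum_mono (J c') (J c - 1) ltac:(lia)). lra.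
Qed.

Lemma spec_dist2_split m j : (1 <= j <= N)%nat ->
  D m = rsum (j - 1) (fun i => term m (S i)) + rsum (N - j) (fun i => term m (j + i)%nat).
Proof.
intros H. unfold spec_dist2. rewrite (rsum_split (j - 1) (N - 1)) by lia.
replace (N - 1 - (j - 1))%nat with (N - j)%nat by lia. f_equal. apply rsum_ext.
intros i Hi. f_equal. lia.
Qed.

Lemma spec_dist2_split3 m j1 j2 : (1 <= j1)%nat -> (j1 <= j2 <= N)%nat ->
  D m = rsum (j1 - 1) (fun i => term m (S i)) + rsum (j2 - j1) (fun i => term m (j1 + i)%nat)
        + rsum (N - j2) (fun i => term m (j2 + i)%nat).
Proof.
intros H1 H2. rewrite (spec_dist2_split m j1), (rsum_split (j2 - j1) (N - j1)) by lia.
replace (N - j1 - (j2 - j1))%nat with (N - j2)%nat by lia.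
rewrite (rsum_ext (N - j2) (fun i => term m (j1 + (j2 - j1 + i))%nat) (fun i => term m (j2 + i)%nat));
  [ring|intros; f_equal; lia].
Qed.

Lemma head_le_Ssum m k : (k <= N - 1)%nat -> rsum k (fun i => term m (S i)) <= Ss k.
Proof.
intros H. apply rsum_le. intros i Hi. unfold spec_term.
pose proof (beta_pow_even_le1 (S i) m ltac:(lia)). pose proof (pow2_ge_0 (mu_phi N mu phi (S i))). nra.
Qed.

Lemma Ssum_beta_le_spec_dist2 m k : (1 <= k <= N - 1)%nat -> Ss k * beta k ^ (2 * m) <= D m.
Proof.
intros H. unfold spec_dist2. rewrite (rsum_split k (N - 1)) by lia.
pose proof (rsum_spec_term_nonneg m (N - 1 - k) (S k)).
rewrite (rsum_ext (N - 1 - k) _ (fun i => term m (S k + i)%nat)) by (intros; f_equal; lia).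
assert (Ss k * beta k ^ (2 * m) <= rsum k (fun i => term m (S i))).
{ unfold Ssum. rewrite <- rsum_scal_r. apply rsum_le. intros i Hi. unfold spec_term.
  apply Rmult_le_compat_l; [apply pow2_ge_0|]. apply pow_even_le, eigen_bounds_antitone; lia. }
lra.
Qed.

Lemma spec_dist2_rate_ge c m : 0 <= c -> c < Ss (N - 1) -> beta (J c) <> 0 ->
  c * exp (-2 * lb (J c) * INR m) <= D m.
Proof.
intros Hc HcS Hn. destruct (jn_spec c) as (A & B & C); [lra|lra|].
pose proof (Ssum_beta_le_spec_dist2 m (J c) ltac:(lia)) as H.
rewrite pow_even_rate in H by exact Hn. pose proof (exp_pos (-2 * lb (J c) * INR m)). nra.
Qed.

Lemma spec_dist2_succ_le m : D (S m) <= D m.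
Proof.
apply rsum_le. intros i Hi. unfold spec_term. apply Rmult_le_compat_l; [apply pow2_ge_0|].
replace (2 * S m)%nat with (2 * 1 + 2 * m)%nat by lia. rewrite pow_add.
pose proof (beta_pow_even_le1 (S i) 1 ltac:(lia)). pose proof (pow_even_nonneg (beta (S i)) m). nra.
Qed.

Lemma spec_dist2_antitone m1 m2 : (m1 <= m2)%nat -> D m2 <= D m1.
Proof. induction 1; [lra|]. pose proof (spec_dist2_succ_le m). lra. Qed.

Lemma segment_le m p len : (1 <= p)%nat -> (p + len <= N)%nat ->
  rsum len (fun i => term m (p + i)%nat) <= (Ss (p + len - 1) - Ss (p - 1)) * beta p ^ (2 * m).
Proof.
intros H1 H2. replace (p + len - 1)%nat with ((p - 1) + len)%nat by lia. rewrite Ssum_add.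
replace (S (p - 1)) with p by lia. rewrite Rplus_comm. unfold Rminus. rewrite Rplus_assoc, Rplus_opp_r, Rplus_0_r.
rewrite <- rsum_scal_r. apply rsum_le. intros i Hi. unfold spec_term.
apply Rmult_le_compat_l; [apply pow2_ge_0|]. apply pow_even_le, eigen_bounds_antitone; lia.
Qed.

Lemma tail_shift_le m k j0 : (1 <= j0)%nat ->
  rsum (N - j0) (fun i => term (m + k) (j0 + i)%nat)
  <= beta j0 ^ (2 * k) * rsum (N - j0) (fun i => term m (j0 + i)%nat).
Proof.
intros H. rewrite <- rsum_scal_l. apply rsum_le. intros i Hi. unfold spec_term.
replace (2 * (m + k))%nat with (2 * m + 2 * k)%nat by lia. rewrite pow_add.
pose proof (pow_even_le (beta (j0 + i)%nat) (beta j0) k (eigen_bounds_antitone j0 (j0 + i) H ltac:(lia) ltac:(lia))).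
pose proof (pow2_ge_0 (mu_phi N mu phi (j0 + i))). pose proof (pow_even_nonneg (beta (j0 + i)%nat) m).
pose proof (pow_even_nonneg (beta (j0 + i)%nat) k).
apply Rle_trans with (mu_phi N mu phi (j0 + i) ^ 2 * beta (j0 + i) ^ (2 * m) * beta j0 ^ (2 * k));
  [rewrite <- Rmult_assoc; apply Rmult_le_compat_l; nra | right; ring].
Qed.

Lemma tau_term_le_tau c j : (J c <= j < N)%nat -> ER_le (tterm j) (tauc c).
Proof.
intros H. unfold tau. replace j with (J c + (j - J c))%nat at 1 by lia.
apply (ER_bigmax_ge _ (fun k => tterm (J c + k))). lia.
Qed.

Lemma tau_term_beta0 j : beta j = 0 -> tterm j = Fin 0.
Proof. intros H. unfold tau_term. now rewrite lam_PInf. Qed.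

Lemma tau_term_rate0 j : beta j <> 0 -> lb j = 0 -> tterm j = PInf.
Proof. intros H H'. unfold tau_term. rewrite lam_Fin by exact H. destruct (Req_dec_T (lb j) 0); [auto|contradiction]. Qed.

Lemma tau_term_Fin j : beta j <> 0 -> lb j <> 0 -> tterm j = Fin (ln (1 + Ss j) / (2 * lb j)).
Proof. intros H H'. unfold tau_term. rewrite lam_Fin by exact H. destruct (Req_dec_T (lb j) 0); [contradiction|auto]. Qed.

Lemma tau_antitone c c' : 0 < c -> c <= c' -> c' < Ss (N - 1) -> ER_le (tauc c') (tauc c).
Proof.
intros H1 H2 H3. pose proof (jn_mono c c' ltac:(lra) H2 H3).
destruct (jn_spec c' ltac:(lra) H3) as (A & _).
unfold tau at 1. apply ER_bigmax_le; [apply ER_bigmax_ge0|].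
intros k Hk. apply tau_term_le_tau. lia.
Qed.

Definition tail_weight (s : R) (k : nat) : R := exp (- (s * ln (1 + Ss k))) / s.

Lemma tail_weight_bounds s k : 0 < s -> 0 <= tail_weight s k <= 1 / s.
Proof.
intros Hs. unfold tail_weight. pose proof (Ssum_nonneg k).
assert (Hln : 0 <= ln (1 + Ss k)) by (rewrite <- ln_1; apply ln_le; lra).
assert (exp (- (s * ln (1 + Ss k))) <= 1)
  by (apply Rle_trans with (exp 0); [apply exp_le_exp; nra|rewrite exp_0; lra]).
pose proof (exp_pos (- (s * ln (1 + Ss k)))).
split; [apply Rlt_le, Rdiv_lt_0_compat; lra|].
unfold Rdiv. apply Rmult_le_compat_r; [apply Rlt_le, Rinv_0_lt_compat|]; lra.
Qed.

Lemma tail_weight_antitone s k : 0 < s -> (1 <= k)%nat -> tail_weight s k <= tail_weight s (k - 1).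
Proof.
intros Hs Hk. unfold tail_weight, Rdiv. apply Rmult_le_compat_r; [apply Rlt_le, Rinv_0_lt_compat; lra|].
apply exp_le_exp. pose proof (Ssum_mono (k - 1) k ltac:(lia)). pose proof (Ssum_nonneg (k - 1)).
pose proof (ln_le (1 + Ss (k - 1)) (1 + Ss k) ltac:(lra) ltac:(lra)). nra.
Qed.

Section FixedThreshold.
Variable c : R.
Hypothesis c_pos : 0 < c.
Hypothesis c_lt : c < Ss (N - 1).

Local Notation Jc := (J c).

Lemma Jc_spec : (1 <= Jc <= N - 1)%nat /\ c < Ss Jc /\ Ss (Jc - 1) <= c.
Proof. apply jn_spec; lra. Qed.

Lemma tau_PInf_abs1 : tauc c = PInf -> Rabs (beta Jc) = 1.
Proof.
intros H. destruct Jc_spec as (A & B & C).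
destruct (ER_bigmax_attained_inf _ _ H) as (k & Hk & Hf).
destruct (Req_dec (beta (Jc + k)) 0) as [e|e]; [rewrite tau_term_beta0 in Hf by exact e; discriminate|].
unfold tau_term in Hf. rewrite lam_Fin in Hf by exact e.
destruct (Req_dec_T (lb (Jc + k)) 0) as [e2|e2]; [|discriminate].
pose proof (rate_eq0 _ _ e e2). pose proof (eigen_bounds_antitone Jc (Jc + k) ltac:(lia) ltac:(lia) ltac:(lia)).
pose proof (eigen_bounds_le1 Jc ltac:(lia)). lra.
Qed.

Lemma abs1_spec_dist2_gt : Rabs (beta Jc) = 1 -> forall m, c < D m.
Proof.
intros H m. destruct Jc_spec as (A & B & C). pose proof (Ssum_beta_le_spec_dist2 m Jc ltac:(lia)) as Hle.
rewrite pow_even_abs, H, pow1 in Hle. lra.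
Qed.

Lemma beta0_spec_dist2_le : beta Jc = 0 -> forall m, (1 <= m)%nat -> D m <= c.
Proof.
intros H m Hm. destruct Jc_spec as (A & B & C). rewrite (spec_dist2_split m Jc) by lia.
rewrite (rsum_ext (N - Jc) _ (fun _ => 0)), rsum_zero.
- pose proof (head_le_Ssum m (Jc - 1) ltac:(lia)). lra.
- intros i Hi. unfold spec_term. rewrite (beta_eq0_tail Jc (Jc + i)), pow_i by (auto; lia). ring.
Qed.

Lemma tau_Fin_pos tau0 : tauc c = Fin tau0 -> beta Jc <> 0 -> 0 < lb Jc /\ 0 < tau0.
Proof.
intros H Hn. destruct Jc_spec as (A & B & C).
pose proof (tau_term_le_tau c Jc ltac:(lia)) as Hle. rewrite H in Hle.
pose proof (rate_nonneg Jc ltac:(lia) Hn).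
destruct (Req_dec (lb Jc) 0) as [e|e]; [rewrite tau_term_rate0 in Hle by auto; contradiction|].
rewrite tau_term_Fin in Hle by auto. simpl in Hle.
assert (0 < ln (1 + Ss Jc)) by (rewrite <- ln_1; apply ln_increasing; lra).
split; [lra|]. apply Rlt_le_trans with (ln (1 + Ss Jc) / (2 * lb Jc)); [apply Rdiv_lt_0_compat|]; lra.
Qed.

Lemma tau_Fin0_beta0 : tauc c = Fin 0 -> beta Jc = 0.
Proof. intros H. destruct (Req_dec (beta Jc) 0) as [|Hn]; [auto|]. destruct (tau_Fin_pos 0 H Hn). lra. Qed.

(* The definition of tau gives beta_j^(2m) <= (1 + S_j)^(-(1+s)) exp(-2 lambda_J h), and
   mu(phi_j)^2 = (1 + S_j) - (1 + S_(j-1)); exp_increment_bound turns each term into an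
   increment of the decreasing sequence tail_weight s. *)
Lemma tail_term_le tau0 s h m j : tauc c = Fin tau0 -> beta Jc <> 0 -> 0 < s -> 0 <= h ->
  (1 + s) * tau0 + h <= INR m -> (1 <= m)%nat -> (Jc <= j < N)%nat ->
  term m j <= (tail_weight s (j - 1) - tail_weight s j) * exp (-2 * lb Jc * h).
Proof.
intros Ht HbJ Hs Hh Hm Hm1 Hj. destruct Jc_spec as (A & B & C).
pose proof (tail_weight_antitone s j Hs ltac:(lia)). pose proof (exp_pos (-2 * lb Jc * h)).
destruct (Req_dec (beta j) 0) as [e|e].
{ unfold spec_term. rewrite e, pow_i by lia. nra. }
pose proof (tau_term_le_tau c j ltac:(lia)) as Hle. rewrite Ht in Hle.
pose proof (rate_mono Jc j ltac:(lia) ltac:(lia) ltac:(lia) e). pose proof (rate_nonneg Jc ltac:(lia) HbJ).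
destruct (Req_dec (lb j) 0) as [e2|e2]; [rewrite tau_term_rate0 in Hle by auto; contradiction|].
rewrite tau_term_Fin in Hle by auto. simpl in Hle.
set (x := ln (1 + Ss j)). set (x' := ln (1 + Ss (j - 1)%nat)).
assert (Hx : x <= 2 * lb j * tau0).
{ apply Rmult_le_reg_r with (/ (2 * lb j)); [apply Rinv_0_lt_compat; lra|].
  replace (2 * lb j * tau0 * / (2 * lb j)) with tau0 by (field; lra). exact Hle. }
pose proof (Ssum_mono (j - 1) j ltac:(lia)). pose proof (Ssum_nonneg (j - 1)).
assert (Hw : (mu_phi N mu phi j)^2 = exp x - exp x').
{ unfold x, x'. rewrite !exp_ln by lra.
  replace j with (S (j - 1)) at 2 by lia. rewrite Ssum_succ. replace (S (j - 1)) with j by lia. ring. }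
assert (Hxx : x' <= x) by (apply ln_le; lra).
assert (Hexp : exp (-2 * lb j * INR m) <= exp (- ((1 + s) * x)) * exp (-2 * lb Jc * h))
  by (rewrite <- exp_plus; apply exp_le_exp; nra).
pose proof (exp_increment_bound x' x s Hs Hxx). pose proof (exp_le_exp _ _ Hxx).
unfold spec_term. rewrite pow_even_rate, Hw by exact e.
apply Rle_trans with ((exp x - exp x') * (exp (- ((1 + s) * x)) * exp (-2 * lb Jc * h)));
  [apply Rmult_le_compat_l; lra|].
replace (tail_weight s (j - 1) - tail_weight s j) with ((exp (- (s * x')) - exp (- (s * x))) / s)
  by (unfold tail_weight, x, x'; field; lra).
rewrite <- Rmult_assoc. apply Rmult_le_compat_r; lra.
Qed.

Lemma tail_le tau0 s h m : tauc c = Fin tau0 -> 0 < tau0 -> beta Jc <> 0 ->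
  0 < s -> 0 <= h -> (1 + s) * tau0 + h <= INR m ->
  rsum (N - Jc) (fun i => term m (Jc + i)%nat) <= exp (-2 * lb Jc * h) / s.
Proof.
intros Ht Ht0 HbJ Hs Hh Hm. destruct Jc_spec as (A & B & C).
assert (Hm1 : (1 <= m)%nat) by (destruct m; [simpl in Hm; nra|lia]).
set (g := fun i => tail_weight s (Jc - 1 + i)).
apply Rle_trans with (rsum (N - Jc) (fun i => (g i - g (S i)) * exp (-2 * lb Jc * h))).
- apply rsum_le. intros i Hi. unfold g.
  replace (Jc - 1 + S i)%nat with (Jc + i)%nat by lia. replace (Jc - 1 + i)%nat with (Jc + i - 1)%nat by lia.
  apply (tail_term_le tau0); auto; lia.
- rewrite rsum_scal_r, rsum_telescope.
  pose proof (tail_weight_bounds s (Jc - 1 + 0) Hs). pose proof (tail_weight_bounds s (Jc - 1 + (N - Jc)) Hs).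
  pose proof (exp_pos (-2 * lb Jc * h)). unfold g.
  replace (exp (-2 * lb Jc * h) / s) with (1 / s * exp (-2 * lb Jc * h)) by (field; lra). nra.
Qed.

Lemma tau_attained tau0 : tauc c = Fin tau0 -> 0 < tau0 ->
  exists j, (Jc <= j < N)%nat /\ beta j <> 0 /\ 0 < lb j /\ ln (1 + Ss j) = 2 * lb j * tau0.
Proof.
intros Ht Ht0. destruct Jc_spec as (A & B & C).
destruct (ER_bigmax_attained_fin _ _ _ Ht Ht0) as (k & Hk & Hf).
exists (Jc + k)%nat. split; [lia|].
destruct (Req_dec (beta (Jc + k)%nat) 0) as [e|e].
{ rewrite tau_term_beta0 in Hf by exact e. injection Hf. lra. }
pose proof (rate_nonneg (Jc + k) ltac:(lia) e).
destruct (Req_dec (lb (Jc + k)%nat) 0) as [e2|e2]; [rewrite tau_term_rate0 in Hf by auto; discriminate|].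
rewrite tau_term_Fin in Hf by auto. injection Hf as Hf.
repeat split; [exact e|lra|]. rewrite <- Hf. field. lra.
Qed.

Lemma tau_pos_beta_nz tau0 : tauc c = Fin tau0 -> 0 < tau0 -> beta Jc <> 0.
Proof.
intros Ht Ht0 e. destruct Jc_spec as (A & B & C). destruct (tau_attained tau0 Ht Ht0) as (j & Hj & Hn & _).
apply Hn, (beta_eq0_tail Jc j); auto; lia.
Qed.

Lemma spec_dist2_upper tau0 s h m : tauc c = Fin tau0 -> 0 < tau0 ->
  0 < s -> 0 <= h -> (1 + s) * tau0 + h <= INR m ->
  D m <= c + exp (-2 * lb Jc * h) / s.
Proof.
intros Ht Ht0 Hs Hh Hm. destruct Jc_spec as (A & B & C).
pose proof (tau_pos_beta_nz tau0 Ht Ht0) as HbJ.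
rewrite (spec_dist2_split m Jc) by lia. pose proof (head_le_Ssum m (Jc - 1) ltac:(lia)).
pose proof (tail_le tau0 s h m Ht Ht0 HbJ Hs Hh Hm). lra.
Qed.

Lemma spec_dist2_lower tau0 h m : tauc c = Fin tau0 -> 0 < tau0 -> 0 <= h ->
  INR m + h <= tau0 -> c / (1 + c) * exp (2 * lb Jc * h) <= D m.
Proof.
intros Ht Ht0 Hh Hm. destruct Jc_spec as (A & B & C).
destruct (tau_attained tau0 Ht Ht0) as (j & Hj & Hn & Hl & Hx).
pose proof (Ssum_beta_le_spec_dist2 m j ltac:(lia)) as HD. rewrite pow_even_rate in HD by exact Hn.
pose proof (rate_mono Jc j ltac:(lia) ltac:(lia) ltac:(lia) Hn).
pose proof (rate_nonneg Jc ltac:(lia) (tau_pos_beta_nz tau0 Ht Ht0)).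
pose proof (Ssum_mono Jc j ltac:(lia)).
assert (E1 : exp (-2 * lb j * INR m) >= exp (2 * lb j * h) / (1 + Ss j)).
{ replace (exp (2 * lb j * h) / (1 + Ss j)) with (exp (2 * lb j * h - ln (1 + Ss j))).
  2:{ unfold Rminus. rewrite exp_plus, exp_Ropp, exp_ln by lra. field. lra. }
  apply Rle_ge, exp_le_exp. rewrite Hx. nra. }
assert (E2 : exp (2 * lb Jc * h) <= exp (2 * lb j * h)) by (apply exp_le_exp; nra).
assert (E3 : c / (1 + c) <= Ss j / (1 + Ss j)).
{ apply Rmult_le_reg_r with ((1 + c) * (1 + Ss j)); [nra|]. field_simplify; nra. }
pose proof (exp_pos (2 * lb Jc * h)).
apply Rle_trans with (Ss j / (1 + Ss j) * exp (2 * lb j * h)).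
- apply Rmult_le_compat; try lra. apply Rlt_le, Rdiv_lt_0_compat; lra.
- apply Rle_trans with (Ss j * exp (-2 * lb j * INR m)); [|exact HD].
  replace (Ss j / (1 + Ss j) * exp (2 * lb j * h)) with (Ss j * (exp (2 * lb j * h) / (1 + Ss j)))
    by (field; lra).
  apply Rmult_le_compat_l; lra.
Qed.

Lemma spec_dist2_after_2tau tau0 m : tauc c = Fin tau0 -> (1 <= m)%nat -> 2 * tau0 <= INR m ->
  D m <= c + 1.
Proof.
intros Ht Hm1 Hm. pose proof (ER_bigmax_ge0 (N - Jc) (fun k => tterm (Jc + k))) as H0.
change (ER_bigmax (N - Jc) (fun k => tterm (Jc + k))) with (tauc c) in H0. rewrite Ht in H0. simpl in H0.
destruct (Req_dec tau0 0) as [->|e].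
- pose proof (beta0_spec_dist2_le (tau_Fin0_beta0 Ht) m Hm1). lra.
- pose proof (spec_dist2_upper tau0 1 0 m Ht ltac:(lra) ltac:(lra) ltac:(lra) ltac:(lra)) as Hup.
  rewrite Rmult_0_r, exp_0 in Hup. lra.
Qed.

End FixedThreshold.

Lemma middle_segment_le c c' m : 0 < c' -> c' <= c -> c < Ss (N - 1) -> beta (J c') <> 0 ->
  rsum (J c - J c') (fun i => term m (J c' + i)%nat) <= c * exp (-2 * lb (J c') * INR m).
Proof.
intros Hc' Hcc Hs Hnz.
destruct (jn_spec c) as (A & B & C); [lra|lra|].
destruct (jn_spec c') as (A' & B' & C'); [lra|lra|].
pose proof (jn_mono c' c ltac:(lra) Hcc Hs).
pose proof (segment_le m (J c') (J c - J c')%nat ltac:(lia) ltac:(lia)) as Hseg.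
replace (J c' + (J c - J c') - 1)%nat with (J c - 1)%nat in Hseg by lia.
rewrite pow_even_rate in Hseg by exact Hnz.
pose proof (Ssum_mono (J c' - 1) (J c - 1) ltac:(lia)). pose proof (Ssum_nonneg (J c' - 1)).
pose proof (exp_pos (-2 * lb (J c') * INR m)).
apply (Rle_trans _ _ _ Hseg). apply Rmult_le_compat_r; lra.
Qed.

End SpectralProfile.

(** * Families of chains *)

Section Family.
Variables (N : nat -> nat) (K : nat -> nat -> nat -> R) (pi mu : nat -> nat -> R)
  (beta : nat -> nat -> R) (phi : nat -> nat -> nat -> R).
Hypothesis chain : forall n, irred_rev_chain (N n) (K n) (pi n) (mu n).
Hypothesis spec : forall n, spectral_decomp (N n) (K n) (pi n) (beta n) (phi n).
Hypothesis norm_diverges : cv_infty (fun n => pi_norm2_muK (N n) (K n) (pi n) (mu n)).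

Local Notation d n m := (L2dist (N n) (K n) (pi n) (mu n) m).
Local Notation D n m := (spec_dist2 (N n) (mu n) (beta n) (phi n) m).
Local Notation term n := (spec_term (N n) (mu n) (beta n) (phi n)).
Local Notation Sn n j := (Ssum (N n) (mu n) (phi n) j).
Local Notation Jn n c := (jn (N n) (mu n) (phi n) c).
Local Notation rn n j := (rate (beta n) j).
Local Notation lamJ n c := (lam (beta n) (jn (N n) (mu n) (phi n) c)).
Local Notation tauN n c := (tau (N n) (mu n) (beta n) (phi n) c).
Local Notation T n eps := (T2 (N n) (K n) (pi n) (mu n) eps).

Let bounds n : eigen_bounds (N n) (beta n) := eigen_bounds_of_chain (chain n) (spec n).

Lemma d_spectral n m : d n m = sqrt (D n m).
Proof. exact (L2dist_spectral (chain n) (spec n) m). Qed.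

Lemma eventually_spec_dist2_1_gt M : eventually (fun n => M < D n 1).
Proof.
destruct (norm_diverges (M + 1)) as [N0 H]. exists N0. intros n Hn. specialize (H n Hn).
rewrite (pi_norm2_muK_spectral (chain n) (spec n)) in H. lra.
Qed.

Lemma eventually_spec_dist2_0_gt M : eventually (fun n => M < D n 0).
Proof.
apply (eventually_mono _ _ (eventually_spec_dist2_1_gt M)). intros n H.
pose proof (spec_dist2_succ_le (bounds n) (mu:=mu n) (phi:=phi n) 0). lra.
Qed.

Lemma eventually_Ssum_gt c : eventually (fun n => c < Sn n (N n - 1)).
Proof.
apply (eventually_mono _ _ (eventually_spec_dist2_1_gt c)). intros n H.
pose proof (head_le_Ssum (bounds n) (mu:=mu n) (phi:=phi n) 1 (N n - 1) ltac:(lia)). unfold spec_dist2 in H. lra.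
Qed.

Lemma d_cv0_iff (f : nat -> nat) :
  Un_cv (fun n => d n (f n)) 0 <-> forall eta, 0 < eta -> eventually (fun n => D n (f n) < eta).
Proof.
split.
- intros H eta He. destruct (H (sqrt eta) (sqrt_lt_R0 _ He)) as [N0 HN]. exists N0. intros n Hn.
  specialize (HN n Hn). unfold R_dist in HN.
  rewrite Rminus_0_r, d_spectral, Rabs_right in HN by (apply Rle_ge, sqrt_pos).
  apply sqrt_lt_0_alt. exact HN.
- intros H e He. destruct (H (e ^ 2) ltac:(apply pow_lt; auto)) as [N0 HN]. exists N0. intros n Hn.
  specialize (HN n Hn). unfold R_dist. rewrite Rminus_0_r, d_spectral, Rabs_right by (apply Rle_ge, sqrt_pos).
  rewrite <- (sqrt_pow2 e) by lra. apply sqrt_lt_1_alt. split; [apply spec_dist2_nonneg|exact HN].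
Qed.

Lemma d_cv_infty_iff (f : nat -> nat) :
  cv_infty (fun n => d n (f n)) <-> forall M, eventually (fun n => M < D n (f n)).
Proof.
split.
- intros H M. destruct (H (Rmax 1 M)) as [N0 HN]. exists N0. intros n Hn.
  specialize (HN n Hn). rewrite d_spectral in HN.
  pose proof (Rmax_l 1 M). pose proof (Rmax_r 1 M). pose proof (spec_dist2_nonneg (N:=N n) (mu:=mu n) (beta:=beta n) (phi:=phi n) (f n)).
  rewrite <- (sqrt_sqrt (D n (f n))) by assumption. nra.
- intros H M. destruct (H (Rmax 0 M ^ 2)) as [N0 HN]. exists N0. intros n Hn.
  specialize (HN n Hn). rewrite d_spectral. pose proof (Rmax_l 0 M). pose proof (Rmax_r 0 M).
  apply Rle_lt_trans with (Rmax 0 M); [assumption|]. rewrite <- (sqrt_pow2 (Rmax 0 M)) by assumption.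
  apply sqrt_lt_1_alt. split; [apply pow2_ge_0|exact HN].
Qed.

Lemma T_Fin n eps : 0 < eps -> (exists m, D n m <= eps ^ 2) ->
  exists k, T n eps = Fin (INR k) /\ D n k <= eps ^ 2 /\ forall m, D n m <= eps ^ 2 -> (k <= m)%nat.
Proof.
intros He [m Hm].
assert (Hiff : forall m, d n m <= eps <-> D n m <= eps ^ 2)
  by (intros m'; rewrite d_spectral; apply sqrt_le_iff; [apply spec_dist2_nonneg|exact He]).
destruct (T2_fin (N n) (K n) (pi n) (mu n) eps) as (k & H1 & H2 & H3); [exists m; now apply Hiff|].
exists k. repeat split; [exact H1|now apply Hiff|]. intros m' Hm'. apply H3. now apply Hiff.
Qed.

Lemma T_PInf n eps : 0 < eps -> (forall m, eps ^ 2 < D n m) -> T n eps = PInf.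
Proof.
intros He H. apply T2_inf. intros m. rewrite d_spectral.
destruct (Rlt_le_dec eps (sqrt (D n m))) as [|Hle]; [assumption|].
apply sqrt_le_iff in Hle; [specialize (H m); lra|apply spec_dist2_nonneg|exact He].
Qed.

Lemma lamJ_cases n c : 0 < c -> c < Sn n (N n - 1) ->
  (beta n (Jn n c) = 0 /\ lamJ n c = PInf) \/
  (beta n (Jn n c) <> 0 /\ lamJ n c = Fin (rn n (Jn n c)) /\ 0 <= rn n (Jn n c)).
Proof.
intros Hc Hs. destruct (jn_spec c ltac:(lra) Hs) as (A & B & C).
destruct (Req_dec (beta n (Jn n c)) 0) as [e|e].
- left. split; [exact e|now apply lam_PInf].
- right. split; [exact e|split; [now apply lam_Fin|]]. apply (rate_nonneg (bounds n)); [lia|exact e].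
Qed.


(* Condition (4) at a fixed c, with lambda_(j(c)) and tau(c) eventually finite and positive. *)
Definition lam_tau_diverges c : Prop :=
  eventually (fun n => exists l t0, lamJ n c = Fin l /\ tauN n c = Fin t0 /\ 0 < l /\ 0 < t0) /\
  forall M, eventually (fun n => forall l t0, lamJ n c = Fin l -> tauN n c = Fin t0 -> M <= l * t0).

Definition tau_diverges c : Prop := ER_tends_infty (fun n => tauN n c).

Lemma cutoff_time_windows t c : L2_cutoff_time (fun n m => d n m) t -> 0 < c ->
  eventually (fun n => c < Sn n (N n - 1) /\ c + 1 < D n 1 /\
    D n (nat_ceil ((1 + /2) * t n)) < c /\ c + 1 < D n (nat_floor ((1 - /2) * t n)) /\
    INR (nat_ceil ((1 + /2) * t n)) <= 3 * t n).
Proof.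
intros [Htpos Hcut] Hc. destruct (Hcut (/2) ltac:(lra)) as [Hup Hlow].
pose proof (proj1 (d_cv0_iff (fun n => nat_ceil ((1 + /2) * t n))) Hup) as Hsmall.
pose proof (proj1 (d_cv_infty_iff (fun n => nat_floor ((1 - /2) * t n))) Hlow) as Hlarge.
apply (eventually_mono _ _ (eventually_and _ _ (eventually_Ssum_gt c)
  (eventually_and _ _ (eventually_spec_dist2_1_gt (c + 1)) (eventually_and _ _ (eventually_spec_dist2_0_gt (c + 1))
  (eventually_and _ _ (Hsmall c Hc) (Hlarge (c + 1))))))).
intros n (H1 & H2 & H3 & H4 & H5). repeat split; auto.
pose proof (Htpos n). pose proof (nat_ceil_spec ((1 + /2) * t n) ltac:(lra)).
assert (2 <= nat_ceil ((1 + /2) * t n))%nat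
  by (destruct (nat_ceil ((1 + /2) * t n)) as [|[|k]]; [lra|lra|lia]).
apply le_INR in H6. simpl in H6. lra.
Qed.

Lemma cutoff_time_lt_tau t c : L2_cutoff_time (fun n m => d n m) t -> 0 < c ->
  eventually (fun n => exists l t0, lamJ n c = Fin l /\ tauN n c = Fin t0 /\ 0 < l /\ 0 < t0 /\ t n < 8 * t0).
Proof.
intros Hcut Hc. apply (eventually_mono _ _ (cutoff_time_windows t c Hcut Hc)).
intros n (H1 & H2 & Hup & Hlow & _). set (fu := nat_ceil ((1 + /2) * t n)) in Hup.
destruct (jn_spec c ltac:(lra) H1) as (A & B & C).
destruct (lamJ_cases n c Hc H1) as [(Hz & _)|(Hnz & Hl & Hl0)].
{ pose proof (beta0_spec_dist2_le (bounds n) c Hc H1 Hz 1%nat ltac:(lia)). lra. }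
destruct (tauN n c) as [t0|] eqn:Et.
2:{ pose proof (abs1_spec_dist2_gt (bounds n) c Hc H1 (tau_PInf_abs1 (bounds n) c Hc H1 Et) fu). lra. }
assert (Ht0 : 1 / 2 < t0).
{ destruct (Rle_lt_dec t0 (1 / 2)) as [Hle|]; [|assumption].
  pose proof (spec_dist2_after_2tau (bounds n) c Hc H1 t0 1 Et ltac:(lia) ltac:(simpl; lra)). lra. }
exists (rn n (Jn n c)), t0. split; [exact Hl|]. split; [reflexivity|]. split; [|split; [lra|]].
- destruct (Req_dec (rn n (Jn n c)) 0) as [e|e]; [|lra].
  pose proof (abs1_spec_dist2_gt (bounds n) c Hc H1 (rate_eq0 _ _ Hnz e) fu). lra.
- pose proof (proj1 Hcut n).
  pose proof (nat_floor_spec ((1 - /2) * t n) ltac:(lra)) as Hfl.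
  destruct (nat_floor ((1 - /2) * t n)) as [|k] eqn:Efl; [simpl in Hfl; lra|].
  destruct (Rle_lt_dec (2 * t0) (INR (S k))) as [Hle|]; [|lra].
  pose proof (spec_dist2_after_2tau (bounds n) c Hc H1 t0 (S k) Et ltac:(lia) Hle). lra.
Qed.

Lemma cutoff_time_lam_diverges t c : L2_cutoff_time (fun n m => d n m) t -> 0 < c ->
  forall M, eventually (fun n => forall l, lamJ n c = Fin l -> M <= l * t n).
Proof.
intros Hcut Hc M. assert (Hce : 0 < c * exp (-6 * M)) by (apply Rmult_lt_0_compat; [exact Hc|apply exp_pos]).
destruct (proj2 Hcut (/2) ltac:(lra)) as [Hup _].
pose proof (proj1 (d_cv0_iff (fun n => nat_ceil ((1 + /2) * t n))) Hup) as Hsmall.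
apply (eventually_mono _ _ (eventually_and _ _ (cutoff_time_windows t c Hcut Hc) (Hsmall _ Hce))).
intros n ((H1 & _ & _ & _ & Hfu) & HU) l Hl.
set (fu := nat_ceil ((1 + /2) * t n)) in *.
destruct (lam_FinP _ _ _ Hl) as (Hnz & ->).
pose proof (spec_dist2_rate_ge (bounds n) c fu ltac:(lra) H1 Hnz).
destruct (jn_spec c ltac:(lra) H1) as (A & B & C).
pose proof (rate_nonneg (bounds n) (Jn n c) ltac:(lia) Hnz).
assert (Hexp : exp (-2 * rn n (Jn n c) * INR fu) < exp (-6 * M))
  by (apply Rmult_lt_reg_l with c; [exact Hc|lra]).
apply exp_lt_inv in Hexp. nra.
Qed.

Lemma cutoff_lam_tau_diverges t c : L2_cutoff_time (fun n m => d n m) t -> 0 < c -> lam_tau_diverges c.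
Proof.
intros Hcut Hc. pose proof (cutoff_time_lt_tau t c Hcut Hc) as A. split.
- apply (eventually_mono _ _ A). intros n (l & t0 & H1 & H2 & H3 & H4 & _). exists l, t0. auto.
- intros M. apply (eventually_mono _ _ (eventually_and _ _ A (cutoff_time_lam_diverges t c Hcut Hc (8 * M)))).
  intros n ((l & t0 & H1 & H2 & H3 & H4 & H5) & HB) l' t' Hl' Ht'.
  rewrite H1 in Hl'. injection Hl' as <-. rewrite H2 in Ht'. injection Ht' as <-.
  specialize (HB l H1). nra.
Qed.

Lemma cutoff_lam_T_diverges t eps c : L2_cutoff_time (fun n m => d n m) t -> 0 < eps -> 0 < c ->
  ER_tends_infty (fun n => ER_mul (T n eps) (lamJ n c)).
Proof.
intros Hcut He Hc M.
destruct (proj2 Hcut (/2) ltac:(lra)) as [_ Hlow].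
set (fl := fun n => nat_floor ((1 - /2) * t n)).
pose proof (proj1 (d_cv_infty_iff fl) Hlow (eps ^ 2)) as Hlarge.
apply (eventually_mono _ _ (eventually_and _ _ (cutoff_time_lt_tau t c Hcut Hc)
  (eventually_and _ _ (cutoff_time_lam_diverges t c Hcut Hc (2 * M)) Hlarge))).
intros n ((l & t0 & H1 & H2 & H3 & H4 & H5) & HB & HL). specialize (HB l H1).
rewrite H1. pose proof (proj1 Hcut n).
destruct (classic (exists m, D n m <= eps ^ 2)) as [Hex|Hnex].
- destruct (T_Fin n eps He Hex) as (k & Hk1 & Hk2 & Hk3). rewrite Hk1. simpl.
  assert (Hk : (fl n < k)%nat).
  { destruct (Nat.lt_ge_cases (fl n) k) as [|Hge]; [assumption|].
    pose proof (spec_dist2_antitone (bounds n) (mu:=mu n) (phi:=phi n) k (fl n) Hge). lra. }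
  apply (le_INR (S (fl n)) k) in Hk. rewrite S_INR in Hk.
  pose proof (nat_floor_spec ((1 - /2) * t n) ltac:(lra)) as Hfl. fold (fl n) in Hfl.
  assert (t n / 2 * l <= INR k * l) by (apply Rmult_le_compat_r; lra). lra.
- rewrite T_PInf; [rewrite ER_mul_PInf_l by lra; exact I|exact He|].
  intros m. destruct (Rlt_le_dec (eps ^ 2) (D n m)); [assumption|]. exfalso; apply Hnex; exists m; assumption.
Qed.

Lemma cutoff_lam_tau_cross_diverges t ct c : L2_cutoff_time (fun n m => d n m) t -> 0 < ct -> 0 < c ->
  ER_tends_infty (fun n => ER_mul (tauN n ct) (lamJ n c)).
Proof.
intros Hcut Hct Hc M.
apply (eventually_mono _ _ (eventually_and _ _ (cutoff_time_lt_tau t c Hcut Hc)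
  (eventually_and _ _ (cutoff_time_lam_diverges t c Hcut Hc (8 * M)) (cutoff_time_lt_tau t ct Hcut Hct)))).
intros n ((l & t0 & H1 & H2 & H3 & H4 & H5) & HB & (l' & t' & H1' & H2' & H3' & H4' & H5')).
specialize (HB l H1). rewrite H1, H2'. simpl. nra.
Qed.

Lemma cutoff_tau_diverges t c : L2_cutoff_time (fun n m => d n m) t ->
  (forall M, eventually (fun n => M <= t n)) -> 0 < c -> tau_diverges c.
Proof.
intros Hcut Ht Hc M.
apply (eventually_mono _ _ (eventually_and _ _ (cutoff_time_lt_tau t c Hcut Hc) (Ht (8 * M)))).
intros n ((l & t0 & H1 & H2 & H3 & H4 & H5) & HM). rewrite H2. simpl. lra.
Qed.

Lemma T_le_tau n eps c t0 : 0 < eps -> 0 < c -> c <= eps ^ 2 / 2 -> c < Sn n (N n - 1) ->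
  tauN n c = Fin t0 -> 0 < t0 ->
  exists k, T n eps = Fin (INR k) /\ D n k <= eps ^ 2 /\ INR k < (1 + 2 / eps ^ 2) * t0 + 1.
Proof.
intros He Hc Hce H1 Et Ht0. assert (Heps2 : 0 < eps ^ 2) by (apply pow_lt; exact He).
set (s := 2 / eps ^ 2). assert (Hs : 0 < s) by (apply Rdiv_lt_0_compat; lra).
set (m := nat_ceil ((1 + s) * t0)).
pose proof (nat_ceil_spec ((1 + s) * t0) ltac:(nra)) as Hceil. fold m in Hceil.
pose proof (spec_dist2_upper (bounds n) c Hc H1 t0 s 0 m Et Ht0 Hs ltac:(lra) ltac:(lra)) as Hup.
rewrite Rmult_0_r, exp_0 in Hup. replace (1 / s) with (eps ^ 2 / 2) in Hup by (unfold s; field; lra).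
assert (Hm : D n m <= eps ^ 2) by lra.
destruct (T_Fin n eps He (ex_intro _ m Hm)) as (k & Hk1 & Hk2 & Hk3).
exists k. repeat split; [exact Hk1|exact Hk2|].
pose proof (le_INR _ _ (Hk3 m Hm)). lra.
Qed.

Lemma lam_T_lam_tau_diverges eps : 0 < eps ->
  (forall c, 0 < c -> ER_tends_infty (fun n => ER_mul (T n eps) (lamJ n c))) ->
  forall c, 0 < c -> c <= eps ^ 2 / 2 -> lam_tau_diverges c.
Proof.
intros He HT c Hc Hce. assert (Heps2 : 0 < eps ^ 2) by (apply pow_lt; exact He).
set (s := 2 / eps ^ 2). assert (Hs : 0 < s) by (apply Rdiv_lt_0_compat; lra).
assert (Hclaim : forall M, eventually (fun n => exists l t0 k, lamJ n c = Fin l /\ tauN n c = Fin t0 /\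
   0 < l /\ 0 < t0 /\ Rmax 1 M <= INR k * l /\ INR k < (1 + s) * t0 + 1 /\ (2 <= k)%nat)).
{ intros M. apply (eventually_mono _ _ (eventually_and _ _ (eventually_Ssum_gt c)
    (eventually_and _ _ (eventually_spec_dist2_1_gt (eps ^ 2))
    (eventually_and _ _ (eventually_spec_dist2_0_gt (eps ^ 2)) (HT c Hc (Rmax 1 M)))))).
  intros n (H1 & H2 & H3 & H4). pose proof (Rmax_l 1 M).
  destruct (lamJ_cases n c Hc H1) as [(Hz & _)|(Hnz & Hl & Hl0)].
  { pose proof (beta0_spec_dist2_le (bounds n) c Hc H1 Hz 1%nat ltac:(lia)). lra. }
  rewrite Hl in H4.
  destruct (Req_dec (rn n (Jn n c)) 0) as [e|e]; [rewrite e, ER_mul_0_r in H4; simpl in H4; lra|].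
  destruct (tauN n c) as [t0|] eqn:Et.
  2:{ pose proof (rate_abs1 _ _ (tau_PInf_abs1 (bounds n) c Hc H1 Et)). contradiction. }
  destruct (tau_Fin_pos (bounds n) c Hc H1 t0 Et Hnz) as [_ Ht0].
  destruct (T_le_tau n eps c t0 He Hc Hce H1 Et Ht0) as (k & Hk1 & Hk2 & Hk3).
  rewrite Hk1 in H4. simpl in H4.
  exists (rn n (Jn n c)), t0, k. repeat split; auto; try lra.
  destruct k as [|[|k]]; [simpl in Hk2; lra|simpl in Hk2; lra|lia]. }
split.
- apply (eventually_mono _ _ (Hclaim 1)). intros n (l & t0 & k & H1 & H2 & H3 & H4 & _). exists l, t0. auto.
- intros M. apply (eventually_mono _ _ (Hclaim (2 * (1 + s) * M))).
  intros n (l & t0 & k & H1 & H2 & H3 & H4 & H5 & H6 & H7) l' t' Hl' Ht'.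
  rewrite H1 in Hl'. injection Hl' as <-. rewrite H2 in Ht'. injection Ht' as <-.
  pose proof (Rmax_r 1 (2 * (1 + s) * M)). apply le_INR in H7. simpl in H7.
  assert (INR k * l <= 2 * (1 + s) * t0 * l) by nra.
  apply Rmult_le_reg_l with (2 * (1 + s)); lra.
Qed.

Lemma lam_tau_cross_lam_tau_diverges c ct : 0 < c -> c <= ct ->
  ER_tends_infty (fun n => ER_mul (tauN n ct) (lamJ n c)) -> lam_tau_diverges c.
Proof.
intros Hc Hct HT.
assert (Hclaim : forall M, eventually (fun n => exists l t0, lamJ n c = Fin l /\ tauN n c = Fin t0 /\
   0 < l /\ 0 < t0 /\ Rmax 1 M <= l * t0)).
{ intros M. apply (eventually_mono _ _ (eventually_and _ _ (eventually_Ssum_gt ct)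
    (eventually_and _ _ (eventually_spec_dist2_1_gt c) (HT (Rmax 1 M))))).
  intros n (H1 & H2 & H4). pose proof (Rmax_l 1 M).
  assert (H1' : c < Sn n (N n - 1)) by lra.
  destruct (lamJ_cases n c Hc H1') as [(Hz & _)|(Hnz & Hl & Hl0)].
  { pose proof (beta0_spec_dist2_le (bounds n) c Hc H1' Hz 1%nat ltac:(lia)). lra. }
  rewrite Hl in H4.
  destruct (Req_dec (rn n (Jn n c)) 0) as [e|e]; [rewrite e, ER_mul_0_r in H4; simpl in H4; lra|].
  destruct (tauN n c) as [t0|] eqn:Et.
  2:{ pose proof (rate_abs1 _ _ (tau_PInf_abs1 (bounds n) c Hc H1' Et)). contradiction. }
  pose proof (tau_antitone (beta:=beta n) c ct Hc Hct H1) as Hanti. rewrite Et in Hanti.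
  destruct (tauN n ct) as [t'|]; [|contradiction]. simpl in Hanti, H4.
  exists (rn n (Jn n c)), t0. assert (0 < t') by nra. repeat split; auto; nra. }
split.
- apply (eventually_mono _ _ (Hclaim 1)). intros n (l & t0 & H1 & H2 & H3 & H4 & _). exists l, t0. auto.
- intros M. apply (eventually_mono _ _ (Hclaim M)).
  intros n (l & t0 & H1 & H2 & H3 & H4 & H5) l' t' Hl' Ht'.
  rewrite H1 in Hl'. injection Hl' as <-. rewrite H2 in Ht'. injection Ht' as <-.
  pose proof (Rmax_r 1 M). lra.
Qed.

Lemma tau_diverges_small_c :
  (exists eps0, 0 < eps0 /\ ER_tends_infty (fun n => T n eps0)) \/
  (exists c, 0 < c /\ ER_tends_infty (fun n => tauN n c)) ->
  exists c2, 0 < c2 /\ forall c, 0 < c -> c <= c2 -> tau_diverges c.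
Proof.
intros [(eps & He & HT) | (c1 & Hc1 & HE)].
- assert (Heps2 : 0 < eps ^ 2) by (apply pow_lt; exact He).
  set (s := 2 / eps ^ 2). assert (Hs : 0 < s) by (apply Rdiv_lt_0_compat; lra).
  exists (eps ^ 2 / 2). split; [lra|]. intros c Hc Hce M.
  apply (eventually_mono _ _ (eventually_and _ _ (eventually_Ssum_gt c)
    (eventually_and _ _ (eventually_spec_dist2_1_gt (eps ^ 2)) (HT (Rmax 2 ((1 + s) * M + 1)))))).
  intros n (H1 & H2 & H4). pose proof (Rmax_r 2 ((1 + s) * M + 1)).
  destruct (tauN n c) as [t0|] eqn:Et; [|exact I]. simpl.
  destruct (Req_dec (beta n (Jn n c)) 0) as [Hz|Hnz].
  { pose proof (beta0_spec_dist2_le (bounds n) c Hc H1 Hz 1%nat ltac:(lia)). lra. }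
  destruct (tau_Fin_pos (bounds n) c Hc H1 t0 Et Hnz) as [_ Ht0].
  destruct (T_le_tau n eps c t0 He Hc Hce H1 Et Ht0) as (k & Hk1 & _ & Hk3).
  rewrite Hk1 in H4. simpl in H4. fold s in Hk3. apply Rmult_le_reg_l with (1 + s); lra.
- exists c1. split; [exact Hc1|]. intros c Hc Hcc M.
  apply (eventually_mono _ _ (eventually_and _ _ (eventually_Ssum_gt c1) (HE M))). intros n (H1 & H2).
  pose proof (tau_antitone (beta:=beta n) c c1 Hc Hcc H1).
  destruct (tauN n c1), (tauN n c); simpl in *; auto; lra.
Qed.

(* If tau(c') exceeded (1 + r) tau(c0), then at time (1 + r/3) tau(c0) the upper bound
   coming from c0 and the lower bound coming from c' would contradict each other. *)
Lemma tau_ratio_le c' c0 r : 0 < c' -> 0 < c0 -> 0 < r ->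
  lam_tau_diverges c' -> lam_tau_diverges c0 -> tau_diverges c0 ->
  eventually (fun n => forall t' t0, tauN n c' = Fin t' -> tauN n c0 = Fin t0 -> t' <= (1 + r) * t0).
Proof.
intros Hc' Hc0 Hr [G1' G2'] [G1 _] HE.
set (KK := (c0 + 3 / r + 1) * (1 + c') / c' * (1 + r) / r).
apply (eventually_mono _ _ (eventually_and _ _ G1' (eventually_and _ _ (G2' KK)
  (eventually_and _ _ G1 (eventually_and _ _ (eventually_Ssum_gt c0)
  (eventually_and _ _ (eventually_Ssum_gt c') (HE (6 / r)))))))).
intros n ((l' & t' & Hl' & Ht' & Hl'0 & Ht'0) & HK & (l0 & t0 & Hl0 & Ht0 & Hl00 & Ht00) & HS0 & HS' & HE6)
  t1 t2 Ht1 Ht2.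
rewrite Ht' in Ht1. injection Ht1 as <-. rewrite Ht0 in Ht2. injection Ht2 as <-.
rewrite Ht0 in HE6. simpl in HE6. specialize (HK l' t' Hl' Ht').
destruct (Rle_lt_dec t' ((1 + r) * t0)) as [|Hgt]; [assumption|exfalso].
set (m := nat_ceil ((1 + r / 3) * t0)).
pose proof (nat_ceil_spec ((1 + r / 3) * t0) ltac:(nra)) as Hm. fold m in Hm.
assert (Hm2 : INR m <= (1 + r / 2) * t0).
{ assert (r / 6 * (6 / r) = 1) by (field; lra).
  assert (r / 6 * (6 / r) <= r / 6 * t0) by (apply Rmult_le_compat_l; lra). lra. }
pose proof (spec_dist2_upper (bounds n) c0 Hc0 HS0 t0 (r / 3) 0 m Ht0 Ht00 ltac:(lra) ltac:(lra) ltac:(lra)) as U.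
rewrite Rmult_0_r, exp_0 in U. replace (1 / (r / 3)) with (3 / r) in U by (field; lra).
set (h := t' - INR m).
pose proof (gap_lower r t0 t' (INR m) Hr Ht00 Hgt Hm2) as Hh. fold h in Hh.
assert (Hh0 : 0 <= h).
{ assert (0 <= t' * r / (2 * (1 + r))) by (apply Rmult_le_pos; [nra|apply Rlt_le, Rinv_0_lt_compat; lra]). lra. }
pose proof (spec_dist2_lower (bounds n) c' Hc' HS' t' h m Ht' Ht'0 Hh0 ltac:(unfold h; lra)) as L.
destruct (lam_FinP _ _ _ Hl') as (_ & Hlb). rewrite <- Hlb in L.
pose proof (exp_ineq1_le (2 * l' * h)).
assert (HK2 : (c0 + 3 / r + 1) * (1 + c') / c' <= 2 * l' * h).
{ assert (E1 : KK * (r / (1 + r)) = (c0 + 3 / r + 1) * (1 + c') / c') by (unfold KK; field; lra).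
  assert (E2 : l' * t' * (r / (1 + r)) <= 2 * l' * h).
  { apply Rle_trans with (2 * l' * (t' * r / (2 * (1 + r)))); [right; field; lra|].
    apply Rmult_le_compat_l; lra. }
  assert (E3 : KK * (r / (1 + r)) <= l' * t' * (r / (1 + r)))
    by (apply Rmult_le_compat_r; [apply Rlt_le, Rdiv_lt_0_compat|]; lra).
  lra. }
assert (Hpos : 0 < c' / (1 + c')) by (apply Rdiv_lt_0_compat; lra).
assert (Hexp : c' / (1 + c') * (1 + (c0 + 3 / r + 1) * (1 + c') / c') <= c' / (1 + c') * exp (2 * l' * h))
  by (apply Rmult_le_compat_l; lra).
replace (c' / (1 + c') * (1 + (c0 + 3 / r + 1) * (1 + c') / c')) with (c' / (1 + c') + (c0 + 3 / r + 1)) in Hexp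
  by (field; lra).
lra.
Qed.

Lemma tau_cutoff_upper c0 a : 0 < c0 -> (forall c', 0 < c' -> c' <= c0 -> lam_tau_diverges c') ->
  tau_diverges c0 -> 0 < a < 1 ->
  Un_cv (fun n => d n (nat_ceil ((1 + a) * ER_pos_or_one (tauN n c0)))) 0.
Proof.
intros Hc0 HG HE Ha. apply (d_cv0_iff (fun n => nat_ceil ((1 + a) * ER_pos_or_one (tauN n c0)))).
intros eta Heta.
set (c' := Rmin c0 (eta / 2)).
assert (Hc' : 0 < c') by (apply Rmin_pos; lra).
assert (Hc'0 : c' <= c0) by apply Rmin_l. assert (Hc'e : c' <= eta / 2) by apply Rmin_r.
destruct (HG c0 Hc0 ltac:(lra)) as [G1 _]. destruct (HG c' Hc' Hc'0) as [G1' G2'].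
set (KK := 64 / (a ^ 2 * eta) + 1).
assert (HKK : 1 <= KK)
  by (assert (0 < 64 / (a ^ 2 * eta)) by (apply Rdiv_lt_0_compat; [lra|apply Rmult_lt_0_compat; [apply pow_lt|]; lra]); unfold KK; lra).
pose proof (tau_ratio_le c' c0 (a / 2) Hc' Hc0 ltac:(lra) (HG c' Hc' Hc'0) (HG c0 Hc0 ltac:(lra)) HE) as Hr.
apply (eventually_mono _ _ (eventually_and _ _ G1 (eventually_and _ _ G1'
  (eventually_and _ _ (G2' KK) (eventually_and _ _ (eventually_Ssum_gt c') Hr))))).
intros n ((l0 & t0 & Hl0 & Ht0 & Hl00 & Ht00) & (l' & t' & Hl' & Ht' & Hl'0 & Ht'0) & HK & HS' & HR).
specialize (HK l' t' Hl' Ht'). specialize (HR t' t0 Ht' Ht0).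
rewrite Ht0, ER_pos_or_one_Fin by exact Ht00.
set (m := nat_ceil ((1 + a) * t0)).
pose proof (nat_ceil_spec ((1 + a) * t0) ltac:(nra)) as Hm. fold m in Hm.
assert (Hmm : (1 + a / 8) * t' + a * t' / 8 <= INR m).
{ assert ((1 + a / 4) * t' <= (1 + a / 4) * ((1 + a / 2) * t0)) by (apply Rmult_le_compat_l; lra).
  assert ((1 + a) * t0 - (1 + a / 4) * ((1 + a / 2) * t0) = a * t0 * (2 - a) / 8) by field.
  assert (0 <= a * t0 * (2 - a)) by (apply Rmult_le_pos; [apply Rmult_le_pos|]; lra). lra. }
pose proof (spec_dist2_upper (bounds n) c' Hc' HS' t' (a / 8) (a * t' / 8) m Ht' Ht'0 ltac:(lra) ltac:(nra) Hmm) as U.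
destruct (lam_FinP _ _ _ Hl') as (_ & Hlb). rewrite <- Hlb in U.
replace (-2 * l' * (a * t' / 8)) with (- (l' * t' * a / 4)) in U by field.
pose proof (exp_scaled_tail_lt a eta (l' * t') ltac:(lra) Heta HK). lra.
Qed.

Lemma tau_cutoff_lower c0 a : 0 < c0 -> lam_tau_diverges c0 -> 0 < a < 1 ->
  cv_infty (fun n => d n (nat_floor ((1 - a) * ER_pos_or_one (tauN n c0)))).
Proof.
intros Hc0 [G1 G2] Ha. apply (d_cv_infty_iff (fun n => nat_floor ((1 - a) * ER_pos_or_one (tauN n c0)))).
intros M. set (KK := (Rabs M + 1) * (1 + c0) / (2 * a * c0)).
apply (eventually_mono _ _ (eventually_and _ _ G1 (eventually_and _ _ (G2 KK) (eventually_Ssum_gt c0)))).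
intros n ((l0 & t0 & Hl0 & Ht0 & Hl00 & Ht00) & HK & HS0). specialize (HK l0 t0 Hl0 Ht0).
rewrite Ht0, ER_pos_or_one_Fin by exact Ht00.
set (m := nat_floor ((1 - a) * t0)).
pose proof (nat_floor_spec ((1 - a) * t0) ltac:(nra)) as Hm. fold m in Hm.
pose proof (spec_dist2_lower (bounds n) c0 Hc0 HS0 t0 (a * t0) m Ht0 Ht00 ltac:(nra) ltac:(lra)) as L.
destruct (lam_FinP _ _ _ Hl0) as (_ & Hlb). rewrite <- Hlb in L.
assert (Hq : 0 < c0 / (1 + c0)) by (apply Rdiv_lt_0_compat; lra).
pose proof (exp_ineq1_le (2 * l0 * (a * t0))).
assert (c0 / (1 + c0) * (1 + 2 * l0 * (a * t0)) <= c0 / (1 + c0) * exp (2 * l0 * (a * t0)))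
  by (apply Rmult_le_compat_l; lra).
assert (Rabs M + 1 = c0 / (1 + c0) * (2 * a * KK)) by (unfold KK; field; lra).
assert (2 * a * KK <= 2 * l0 * (a * t0)) by nra.
assert (c0 / (1 + c0) * (2 * a * KK) <= c0 / (1 + c0) * (1 + 2 * l0 * (a * t0)))
  by (apply Rmult_le_compat_l; lra).
pose proof (Rle_abs M). lra.
Qed.

Lemma tau_cutoff_time c0 : 0 < c0 -> (forall c', 0 < c' -> c' <= c0 -> lam_tau_diverges c') ->
  tau_diverges c0 ->
  exists t, L2_cutoff_time (fun n m => d n m) t /\ eventually (fun n => tauN n c0 = Fin (t n)).
Proof.
intros Hc0 HG HE. exists (fun n => ER_pos_or_one (tauN n c0)).
pose proof (HG c0 Hc0 ltac:(lra)) as HG0.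
split; [split|].
- intros n. apply ER_pos_or_one_pos.
- intros a Ha. split; [exact (tau_cutoff_upper c0 a Hc0 HG HE Ha)|exact (tau_cutoff_lower c0 a Hc0 HG0 Ha)].
- apply (eventually_mono _ _ (proj1 HG0)). intros n (l0 & t0 & _ & Ht0 & _ & Ht00).
  rewrite Ht0, ER_pos_or_one_Fin by exact Ht00. reflexivity.
Qed.

Lemma cutoff_dist_reaches t eps : L2_cutoff_time (fun n m => d n m) t -> 0 < eps ->
  eventually (fun n => exists m, D n m <= eps ^ 2).
Proof.
intros [_ Hc] He. destruct (Hc (/2) ltac:(lra)) as [Hup _].
apply (eventually_mono _ _ (proj1 (d_cv0_iff _) Hup (eps ^ 2) ltac:(apply pow_lt; auto))).
intros n H. eexists. left. exact H.
Qed.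

Lemma spec_dist2_three_ranges n c c' m : 0 < c' -> c' <= c -> c < Sn n (N n - 1) -> beta n (Jn n c') <> 0 ->
  D n m <= c' + c * exp (-2 * rn n (Jn n c') * INR m) + rsum (N n - Jn n c) (fun i => term n m (Jn n c + i)%nat).
Proof.
intros Hc' Hcc Hs Hnz.
destruct (jn_spec c ltac:(lra) Hs) as (A & B & C).
assert (Hs' : c' < Sn n (N n - 1)) by lra.
destruct (jn_spec c' ltac:(lra) Hs') as (A' & B' & C').
pose proof (jn_mono c' c ltac:(lra) Hcc Hs).
rewrite (spec_dist2_split3 m (Jn n c') (Jn n c)) by lia.
pose proof (head_le_Ssum (bounds n) (mu:=mu n) (phi:=phi n) m (Jn n c' - 1) ltac:(lia)).
pose proof (middle_segment_le (bounds n) c c' m Hc' Hcc Hs Hnz). lra.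
Qed.

Lemma T_window eps delta c : 0 < eps -> 0 < delta -> 0 < c ->
  (forall c, 0 < c -> lam_tau_diverges c) ->
  (forall c, 0 < c -> ER_tends_infty (fun n => ER_mul (T n delta) (lamJ n c))) ->
  (forall eps, 0 < eps -> eventually (fun n => exists m, D n m <= eps ^ 2)) ->
  eventually (fun n => exists k1 k2 l, T n eps = Fin (INR k1) /\ T n delta = Fin (INR k2) /\
     lamJ n c = Fin l /\ 0 < l /\ INR k1 <= INR k2 + 1 + Rmax 0 (ln (3 * delta ^ 2 / eps ^ 2)) / (2 * l)).
Proof.
intros He Hd Hc HG HT Hex.
assert (He2 : 0 < eps ^ 2) by (apply pow_lt; auto). assert (Hd2 : 0 < delta ^ 2) by (apply pow_lt; auto).
set (c' := Rmin c (eps ^ 2 / 3)).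
assert (Hc' : 0 < c') by (apply Rmin_pos; lra).
assert (Hc'c : c' <= c) by apply Rmin_l. assert (Hc'e : c' <= eps ^ 2 / 3) by apply Rmin_r.
set (L := Rmax 0 (ln (3 * delta ^ 2 / eps ^ 2))).
apply (eventually_mono _ _ (eventually_and _ _ (proj1 (HG c Hc)) (eventually_and _ _ (proj1 (HG c' Hc'))
  (eventually_and _ _ (HT c' Hc' (3 * c / (2 * eps ^ 2) + 1))
  (eventually_and _ _ (Hex delta Hd) (eventually_and _ _ (Hex eps He) (eventually_Ssum_gt c))))))).
intros n ((l & t0 & Hl & Ht & Hl0 & Ht0) & (l' & t' & Hl' & Ht' & Hl'0 & Ht'0) & HTd & Exd & Exe & HSs).
destruct (T_Fin n delta Hd Exd) as (k2 & Hk2 & Dk2 & _).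
destruct (T_Fin n eps He Exe) as (k1 & Hk1 & _ & Mk1).
rewrite Hk2, Hl' in HTd. simpl in HTd.
exists k1, k2, l. repeat split; auto.
destruct (lam_FinP _ _ _ Hl) as (Hnz & Hlb). destruct (lam_FinP _ _ _ Hl') as (Hnz' & Hlb').
destruct (jn_spec c ltac:(lra) HSs) as (A & B & C).
set (k := nat_ceil (L / (2 * l))).
assert (Htail : rsum (N n - Jn n c) (fun i => term n k2 (Jn n c + i)%nat) <= delta ^ 2).
{ rewrite (spec_dist2_split k2 (Jn n c)) in Dk2 by lia.
  assert (0 <= rsum (Jn n c - 1) (fun i => term n k2 (S i))) by (apply rsum_nonneg; intros; apply spec_term_nonneg).
  lra. }
assert (Hdecay : exp (-2 * l * INR k) <= eps ^ 2 / (3 * delta ^ 2)).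
{ replace (eps ^ 2 / (3 * delta ^ 2)) with (/ (3 * delta ^ 2 / eps ^ 2)) by (field; lra).
  apply exp_ceil_ln_le; [lra|apply Rdiv_lt_0_compat; lra]. }
assert (HDm : D n (k2 + k) <= eps ^ 2).
{ pose proof (spec_dist2_three_ranges n c c' (k2 + k) Hc' Hc'c HSs Hnz') as H3.
  rewrite <- Hlb' in H3.
  pose proof (exp_middle_le c (eps ^ 2) l' (INR k2) (INR (k2 + k)) Hc He2 ltac:(lra)
    ltac:(rewrite plus_INR; pose proof (pos_INR k2); pose proof (pos_INR k); lra) HTd) as Hmid.
  pose proof (tail_shift_le (bounds n) (mu:=mu n) (phi:=phi n) k2 k (Jn n c) ltac:(lia)) as Hshift.
  rewrite pow_even_rate, <- Hlb in Hshift by exact Hnz.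
  assert (Hprod : exp (-2 * l * INR k) * rsum (N n - Jn n c) (fun i => term n k2 (Jn n c + i)%nat)
     <= eps ^ 2 / (3 * delta ^ 2) * delta ^ 2).
  { apply Rmult_le_compat; [apply Rlt_le, exp_pos|apply rsum_spec_term_nonneg|lra|lra]. }
  replace (eps ^ 2 / (3 * delta ^ 2) * delta ^ 2) with (eps ^ 2 / 3) in Hprod by (field; lra).
  lra. }
pose proof (le_INR _ _ (Mk1 _ HDm)) as Hk1k. rewrite plus_INR in Hk1k.
assert (HL0 : 0 <= L) by apply Rmax_l.
pose proof (nat_ceil_spec (L / (2 * l)) ltac:(apply Rmult_le_pos; [lra|apply Rlt_le, Rinv_0_lt_compat; lra])) as Hk.
fold k in Hk. lra.
Qed.

Lemma T_tau_upper n eps c c' t0 l l' : 0 < eps -> 0 < c' -> c' <= c -> c' <= eps ^ 2 / 3 ->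
  c < Sn n (N n - 1) -> tauN n c = Fin t0 -> lamJ n c = Fin l -> lamJ n c' = Fin l' -> 0 < l -> 0 < t0 ->
  3 * c / (2 * eps ^ 2) + 1 <= t0 * l' -> 24 / eps ^ 2 <= sqrt (l * t0) ->
  D n (nat_ceil (t0 + sqrt (t0 * / l))) <= eps ^ 2.
Proof.
intros He Hc' Hc'c Hc'e HSs Ht Hl Hl' Hl0 Ht0 HK HY.
assert (He2 : 0 < eps ^ 2) by (apply pow_lt; exact He).
destruct (lam_FinP _ _ _ Hl) as (Hnz & Hlb). destruct (lam_FinP _ _ _ Hl') as (Hnz' & Hlb').
set (x := sqrt (t0 * / l)). set (y := sqrt (l * t0)).
destruct (sqrt_ratio_mul t0 l Ht0 Hl0) as [Hxy Hlx]. fold x y in Hxy, Hlx.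
assert (Hx0 : 0 < x) by (apply sqrt_lt_R0; apply Rmult_lt_0_compat; [lra|apply Rinv_0_lt_compat; lra]).
assert (Hl'0 : 0 <= l') by (rewrite Hlb'; apply (rate_nonneg (bounds n)); [|exact Hnz'];
  destruct (jn_spec (N:=N n) (mu:=mu n) (phi:=phi n) c' ltac:(lra) ltac:(lra)); lia).
set (m := nat_ceil (t0 + x)). pose proof (nat_ceil_spec (t0 + x) ltac:(lra)) as Hm. fold m in Hm.
pose proof (spec_dist2_three_ranges n c c' m Hc' Hc'c HSs Hnz') as H3. rewrite <- Hlb' in H3.
pose proof (exp_middle_le c (eps ^ 2) l' t0 (INR m) ltac:(lra) He2 Hl'0 ltac:(lra) HK) as Hmid.
assert (Hsm : (1 + x / (2 * t0)) * t0 + x / 2 <= INR m)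
  by (replace ((1 + x / (2 * t0)) * t0 + x / 2) with (t0 + x) by (field; lra); lra).
pose proof (tail_le (bounds n) c ltac:(lra) HSs t0 (x / (2 * t0)) (x / 2) m Ht Ht0 Hnz
  ltac:(apply Rdiv_lt_0_compat; lra) ltac:(lra) Hsm) as Htail.
rewrite <- Hlb in Htail.
replace (exp (-2 * l * (x / 2)) / (x / (2 * t0))) with (2 * y * exp (- y)) in Htail.
2:{ assert (Hy0 : 0 < y) by (apply sqrt_lt_R0; nra).
    replace (-2 * l * (x / 2)) with (- y) by (rewrite <- Hlx; field). rewrite <- Hxy. field. lra. }
pose proof (exp_sqrt_tail_le y (eps ^ 2) He2 HY). lra.
Qed.

Lemma T_tau_lower n eps c t0 l k : 0 < c -> c < Sn n (N n - 1) -> tauN n c = Fin t0 -> lamJ n c = Fin l ->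
  0 < l -> 0 < t0 -> eps ^ 2 * (1 + c) / (2 * c) <= sqrt (l * t0) -> D n k <= eps ^ 2 ->
  t0 - sqrt (t0 * / l) < INR k.
Proof.
intros Hc HSs Ht Hl Hl0 Ht0 HY Hk.
destruct (lam_FinP _ _ _ Hl) as (Hnz & Hlb).
set (x := sqrt (t0 * / l)). set (y := sqrt (l * t0)).
destruct (sqrt_ratio_mul t0 l Ht0 Hl0) as [_ Hlx]. fold x y in Hlx, HY.
assert (Hx0 : 0 < x) by (apply sqrt_lt_R0; apply Rmult_lt_0_compat; [lra|apply Rinv_0_lt_compat; lra]).
destruct (Rlt_le_dec (t0 - x) (INR k)) as [|Hle]; [assumption|exfalso].
pose proof (spec_dist2_lower (bounds n) c Hc HSs t0 x k Ht Ht0 ltac:(lra) ltac:(lra)) as LB.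
rewrite <- Hlb in LB. replace (2 * l * x) with (2 * y) in LB by (rewrite <- Hlx; ring).
pose proof (exp_ineq1_le (2 * y)).
assert (Hq : 0 < c / (1 + c)) by (apply Rdiv_lt_0_compat; lra).
assert (c / (1 + c) * (1 + 2 * y) <= c / (1 + c) * exp (2 * y)) by (apply Rmult_le_compat_l; lra).
assert (eps ^ 2 = c / (1 + c) * (2 * (eps ^ 2 * (1 + c) / (2 * c)))) by (field; lra).
assert (c / (1 + c) * (2 * (eps ^ 2 * (1 + c) / (2 * c))) < c / (1 + c) * (1 + 2 * y))
  by (apply Rmult_lt_compat_l; lra).
lra.
Qed.

Lemma T_tau_window eps c : 0 < eps -> 0 < c ->
  (forall c, 0 < c -> lam_tau_diverges c) ->
  (forall c', 0 < c' -> ER_tends_infty (fun n => ER_mul (tauN n c) (lamJ n c'))) ->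
  (forall eps, 0 < eps -> eventually (fun n => exists m, D n m <= eps ^ 2)) ->
  eventually (fun n => exists k t0 l, T n eps = Fin (INR k) /\ tauN n c = Fin t0 /\ lamJ n c = Fin l /\
     Rabs (INR k - t0) <= 2 * Rmax 1 (sqrt (t0 * / l))).
Proof.
intros He Hc HG HT Hex.
assert (He2 : 0 < eps ^ 2) by (apply pow_lt; exact He).
set (c' := Rmin c (eps ^ 2 / 3)).
assert (Hc' : 0 < c') by (apply Rmin_pos; lra).
assert (Hc'c : c' <= c) by apply Rmin_l. assert (Hc'e : c' <= eps ^ 2 / 3) by apply Rmin_r.
set (Y1 := 24 / eps ^ 2). set (Y2 := eps ^ 2 * (1 + c) / (2 * c)).
apply (eventually_mono _ _ (eventually_and _ _ (proj1 (HG c Hc))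
  (eventually_and _ _ (proj2 (HG c Hc) (Y1 ^ 2 + Y2 ^ 2)) (eventually_and _ _ (proj1 (HG c' Hc'))
  (eventually_and _ _ (HT c' Hc' (3 * c / (2 * eps ^ 2) + 1))
  (eventually_and _ _ (Hex eps He) (eventually_Ssum_gt c))))))).
intros n ((l & t0 & Hl & Ht & Hl0 & Ht0) & HK & (l' & t' & Hl' & _) & HTc & Exe & HSs).
specialize (HK l t0 Hl Ht). rewrite Ht, Hl' in HTc. simpl in HTc.
destruct (T_Fin n eps He Exe) as (k & Hk1 & Dk & Mk).
exists k, t0, l. repeat split; auto.
assert (Hy : Y1 <= sqrt (l * t0) /\ Y2 <= sqrt (l * t0)).
{ pose proof (sqrt_pos (l * t0)). pose proof (sqrt_sqrt (l * t0) ltac:(nra)).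
  assert (0 < Y1) by (apply Rdiv_lt_0_compat; lra). assert (0 < Y2) by (apply Rdiv_lt_0_compat; nra).
  split; nra. }
pose proof (T_tau_upper n eps c c' t0 l l' He Hc' Hc'c Hc'e HSs Ht Hl Hl' Hl0 Ht0 HTc (proj1 Hy)) as Hup.
pose proof (le_INR _ _ (Mk _ Hup)) as Hkm.
pose proof (nat_ceil_spec (t0 + sqrt (t0 * / l)) ltac:(pose proof (sqrt_pos (t0 * / l)); lra)).
pose proof (T_tau_lower n eps c t0 l k Hc HSs Ht Hl Hl0 Ht0 (proj2 Hy) Dk).
pose proof (Rmax_l 1 (sqrt (t0 * / l))). pose proof (Rmax_r 1 (sqrt (t0 * / l))).
apply Rabs_le. split; lra.
Qed.

Hypothesis time_diverges :
  (exists eps0, 0 < eps0 /\ ER_tends_infty (fun n => T n eps0)) \/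
  (exists c, 0 < c /\ ER_tends_infty (fun n => tauN n c)).

Lemma cutoff_consequences : has_L2_cutoff (fun n m => d n m) ->
  (forall c, 0 < c -> lam_tau_diverges c) /\ (forall c, 0 < c -> tau_diverges c) /\
  (forall eps c, 0 < eps -> 0 < c -> ER_tends_infty (fun n => ER_mul (T n eps) (lamJ n c))) /\
  (forall ct c, 0 < ct -> 0 < c -> ER_tends_infty (fun n => ER_mul (tauN n ct) (lamJ n c))) /\
  (forall eps, 0 < eps -> eventually (fun n => exists m, D n m <= eps ^ 2)).
Proof.
intros [t Ht].
assert (HG : forall c, 0 < c -> lam_tau_diverges c) by (intros; eapply cutoff_lam_tau_diverges; eauto).
destruct (tau_diverges_small_c time_diverges) as (c2 & Hc2 & HE2).
destruct (tau_cutoff_time c2 Hc2 ltac:(intros; apply HG; lra) (HE2 c2 Hc2 ltac:(lra))) as (t' & Ht' & Hev).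
assert (Ht'inf : forall M, eventually (fun n => M <= t' n)).
{ intros M. apply (eventually_mono _ _ (eventually_and _ _ Hev (HE2 c2 Hc2 ltac:(lra) M))).
  intros n (A & B). rewrite A in B. exact B. }
split; [exact HG|]. split; [intros; now apply (cutoff_tau_diverges t')|].
split; [intros; now apply (cutoff_lam_T_diverges t)|].
split; [intros; now apply (cutoff_lam_tau_cross_diverges t)|].
intros; now apply (cutoff_dist_reaches t).
Qed.

Lemma cutoff_of_lam_tau_diverges :
  (exists cs, 0 < cs /\ forall c, 0 < c -> c <= cs -> lam_tau_diverges c) -> has_L2_cutoff (fun n m => d n m).
Proof.
intros (cs & Hcs & HG). destruct (tau_diverges_small_c time_diverges) as (c2 & Hc2 & HE2).
set (c0 := Rmin cs c2). assert (Hc0 : 0 < c0) by (apply Rmin_pos; auto).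
assert (c0 <= cs) by apply Rmin_l. assert (c0 <= c2) by apply Rmin_r.
destruct (tau_cutoff_time c0 Hc0 ltac:(intros; apply HG; lra) (HE2 c0 Hc0 ltac:(lra))) as (t & Ht & _).
exists t. exact Ht.
Qed.

Lemma cutoff_equivalences :
  (has_L2_cutoff (fun n m => d n m) <->
     (forall eps c, 0 < eps -> 0 < c -> ER_tends_infty (fun n => ER_mul (T n eps) (lamJ n c)))) /\
  (has_L2_cutoff (fun n m => d n m) <->
     (exists eps, 0 < eps /\ forall c, 0 < c -> ER_tends_infty (fun n => ER_mul (T n eps) (lamJ n c)))) /\
  (has_L2_cutoff (fun n m => d n m) <->
     (forall c, 0 < c -> ER_tends_infty (fun n => ER_mul (tauN n c) (lamJ n c)))) /\
  (has_L2_cutoff (fun n m => d n m) <->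
     (forall ct c, 0 < ct -> 0 < c -> ER_tends_infty (fun n => ER_mul (tauN n ct) (lamJ n c)))) /\
  (has_L2_cutoff (fun n m => d n m) <->
     (exists ct, 0 < ct /\ forall c, 0 < c -> ER_tends_infty (fun n => ER_mul (tauN n ct) (lamJ n c)))).
Proof.
assert (from_T : forall eps, 0 < eps ->
   (forall c, 0 < c -> ER_tends_infty (fun n => ER_mul (T n eps) (lamJ n c))) -> has_L2_cutoff (fun n m => d n m)).
{ intros eps He H. apply cutoff_of_lam_tau_diverges. exists (eps ^ 2 / 2).
  split; [assert (0 < eps ^ 2) by (apply pow_lt; auto); lra|].
  intros c Hc Hce. exact (lam_T_lam_tau_diverges eps He H c Hc Hce). }
assert (from_tau : forall ct, 0 < ct ->
   (forall c, 0 < c -> ER_tends_infty (fun n => ER_mul (tauN n ct) (lamJ n c))) -> has_L2_cutoff (fun n m => d n m)).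
{ intros ct Hct H. apply cutoff_of_lam_tau_diverges. exists ct. split; [exact Hct|].
  intros c Hc Hcc. exact (lam_tau_cross_lam_tau_diverges c ct Hc Hcc (H c Hc)). }
repeat split.
- intros Hcut. apply (cutoff_consequences Hcut).
- intros H. apply (from_T 1); [lra|intros c Hc; apply H; lra].
- intros Hcut. exists 1. split; [lra|]. intros; apply (cutoff_consequences Hcut); lra.
- intros (eps & He & H). exact (from_T eps He H).
- intros Hcut c Hc. apply (cutoff_consequences Hcut); exact Hc.
- intros H. apply cutoff_of_lam_tau_diverges. exists 1. split; [lra|].
  intros c Hc _. apply (lam_tau_cross_lam_tau_diverges c c); [exact Hc|lra|exact (H c Hc)].
- intros Hcut. apply (cutoff_consequences Hcut).
- intros H. apply (from_tau 1); [lra|]. intros c Hc. apply H; lra.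
- intros Hcut. exists 1. split; [lra|]. intros; apply (cutoff_consequences Hcut); lra.
- intros (ct & Hct & H). exact (from_tau ct Hct H).
Qed.

Lemma cutoff_tau_cutoff_time c : has_L2_cutoff (fun n m => d n m) -> 0 < c ->
  exists t, L2_cutoff_time (fun n m => d n m) t /\ eventually (fun n => tauN n c = Fin (t n)).
Proof.
intros Hcut Hc. destruct (cutoff_consequences Hcut) as (HG & HE & _).
apply (tau_cutoff_time c Hc); [intros c' Hc' _; exact (HG c' Hc')|exact (HE c Hc)].
Qed.

Lemma cutoff_T_diff eps delta c : has_L2_cutoff (fun n m => d n m) -> 0 < eps -> 0 < delta -> 0 < c ->
  exists C, eventually (fun n => exists t1 t2, T n eps = Fin t1 /\ T n delta = Fin t2 /\
    Rabs (t1 - t2) <= C * Rmax 1 (ER_inv (lamJ n c))).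
Proof.
intros Hcut He Hd Hc. destruct (cutoff_consequences Hcut) as (HG & _ & HT & _ & Hex).
set (L1 := Rmax 0 (ln (3 * delta ^ 2 / eps ^ 2))). set (L2 := Rmax 0 (ln (3 * eps ^ 2 / delta ^ 2))).
assert (HL1 : 0 <= L1) by apply Rmax_l. assert (HL2 : 0 <= L2) by apply Rmax_l.
exists (1 + (L1 + L2) / 2).
apply (eventually_mono _ _ (eventually_and _ _ (T_window eps delta c He Hd Hc HG (fun c' => HT delta c' Hd) Hex)
  (T_window delta eps c Hd He Hc HG (fun c' => HT eps c' He) Hex))).
intros n ((k1 & k2 & l & E1 & E2 & El & Hl & I1) & (k2' & k1' & l' & E2' & E1' & El' & _ & I2)).
exists (INR k1), (INR k2). split; [exact E1|]. split; [exact E2|].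
rewrite E1 in E1'. injection E1' as E1'. rewrite E2 in E2'. injection E2' as E2'.
rewrite El in El'. injection El' as <-.
rewrite El. simpl. fold L1 in I1. fold L2 in I2. rewrite <- E1', <- E2' in I2.
pose proof (Rmax_l 1 (/ l)). pose proof (Rmax_r 1 (/ l)).
assert (L1 / (2 * l) = L1 / 2 * / l) by (field; lra). assert (L2 / (2 * l) = L2 / 2 * / l) by (field; lra).
assert (L1 / 2 * / l <= L1 / 2 * Rmax 1 (/ l)) by (apply Rmult_le_compat_l; lra).
assert (L2 / 2 * / l <= L2 / 2 * Rmax 1 (/ l)) by (apply Rmult_le_compat_l; lra).
apply Rabs_le. split; nra.
Qed.

Lemma cutoff_T_tau_diff eps c : has_L2_cutoff (fun n m => d n m) -> 0 < eps -> 0 < c ->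
  eventually (fun n => exists t s, T n eps = Fin t /\ tauN n c = Fin s /\
    Rabs (t - s) <= 2 * Rmax 1 (sqrt (s * ER_inv (lamJ n c)))).
Proof.
intros Hcut He Hc. destruct (cutoff_consequences Hcut) as (HG & _ & _ & Htau & Hex).
apply (eventually_mono _ _ (T_tau_window eps c He Hc HG (fun c' => Htau c c' Hc) Hex)).
intros n (k & t0 & l & E1 & E2 & El & I). exists (INR k), t0. repeat split; auto. now rewrite El.
Qed.

End Family.

Theorem theorem3p3
  (N : nat -> nat) (K : nat -> nat -> nat -> R) (pi mu : nat -> nat -> R)
  (beta : nat -> nat -> R) (phi : nat -> nat -> nat -> R) :
  (forall n, irred_rev_chain (N n) (K n) (pi n) (mu n)) ->
  (forall n, spectral_decomp (N n) (K n) (pi n) (beta n) (phi n)) ->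
  let d := fun n m => L2dist (N n) (K n) (pi n) (mu n) m in
  let T := fun n eps => T2 (N n) (K n) (pi n) (mu n) eps in
  let lamj := fun n c => lam (beta n) (jn (N n) (mu n) (phi n) c) in
  let ta := fun n c => tau (N n) (mu n) (beta n) (phi n) c in
  ((exists eps0, 0 < eps0 /\ ER_tends_infty (fun n => T n eps0)) \/
   (exists c, 0 < c /\ ER_tends_infty (fun n => ta n c))) ->
  cv_infty (fun n => pi_norm2_muK (N n) (K n) (pi n) (mu n)) ->
  ((has_L2_cutoff d <->
      (forall eps c, 0 < eps -> 0 < c ->
         ER_tends_infty (fun n => ER_mul (T n eps) (lamj n c)))) /\
   (has_L2_cutoff d <->
      (exists eps, 0 < eps /\ forall c, 0 < c ->
         ER_tends_infty (fun n => ER_mul (T n eps) (lamj n c)))) /\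
   (has_L2_cutoff d <->
      (forall c, 0 < c ->
         ER_tends_infty (fun n => ER_mul (ta n c) (lamj n c)))) /\
   (has_L2_cutoff d <->
      (forall ct c, 0 < ct -> 0 < c ->
         ER_tends_infty (fun n => ER_mul (ta n ct) (lamj n c)))) /\
   (has_L2_cutoff d <->
      (exists ct, 0 < ct /\ forall c, 0 < c ->
         ER_tends_infty (fun n => ER_mul (ta n ct) (lamj n c))))) /\
  (has_L2_cutoff d ->
     (forall c, 0 < c ->
        exists t : nat -> R, L2_cutoff_time d t /\
          exists N0, forall n, (N0 <= n)%nat -> ta n c = Fin (t n)) /\
     (forall eps delta c, 0 < eps -> 0 < delta -> 0 < c ->
        exists C N0, forall n, (N0 <= n)%nat ->
          exists t1 t2, T n eps = Fin t1 /\ T n delta = Fin t2 /\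
            Rabs (t1 - t2) <= C * Rmax 1 (ER_inv (lamj n c))) /\
     (forall eps c, 0 < eps -> 0 < c ->
        exists C N0, forall n, (N0 <= n)%nat ->
          exists t s, T n eps = Fin t /\ ta n c = Fin s /\
            Rabs (t - s) <= C * Rmax 1 (sqrt (s * ER_inv (lamj n c))))).
Proof.
intros chain spec d T lamj ta time_diverges norm_diverges.
split; [exact (cutoff_equivalences N K pi mu beta phi chain spec norm_diverges time_diverges)|].
intros Hcut. split; [|split].
- intros c Hc. exact (cutoff_tau_cutoff_time N K pi mu beta phi chain spec norm_diverges time_diverges c Hcut Hc).
- intros eps delta c He Hd Hc.
  exact (cutoff_T_diff N K pi mu beta phi chain spec norm_diverges time_diverges eps delta c Hcut He Hd Hc).
- intros eps c He Hc. exists 2.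
  exact (cutoff_T_tau_diff N K pi mu beta phi chain spec norm_diverges time_diverges eps c Hcut He Hc).
Qed.
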